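(* Let $f$ be a real-analytic function on a neighborhood of $[-1,0]$ with $f(-1)=0$ and $f'(x)<0$ for $-1\le x\le 0$. Let $D_2$ be the open triangle bounded by the segment $\{(x,0):-1\le x\le 1\}$ and the lines $y=-x-1$ and $y=x-1$ (with vertices $(-1,0)$, $(1,0)$, $(0,-1)$), and let $AC=\{(x,-x-1):-1\le x\le 0\}$. Then there exists an open set $D_1$ in the upper half-plane $y>0$, adjacent to the whole interval $\{(x,0):-1<x<1\}$ (i.e. $D=D_1\cup\{(x,0):-1<x<1\}\cup D_2$ is a domain), and a function $U\in C^1(D)\cap C^2(D_1)\cap C^2(D_2)$ satisfying $$\frac{\partial^2 U}{\partial x^2}+\operatorname{sign}(U)\,\frac{\partial^2 U}{\partial y^2}=0$$ in $D_1\cup D_2$, with $U>0$ in $D_1$, $U<0$ in $D_2$, and $U(x,-x-1)=f(x)$ for $-1\le x\le 0$. Explicitly, $U(x,y)=f\!\left(\tfrac{x-y-1}{2}\right)-f\!\left(\tfrac{x+y-1}{2}\right)$ in $D_2$, and $U(x,y)=i\left(f\!\left(\tfrac{z-1}{2}\right)-f\!\left(\tfrac{\bar z-1}{2}\right)\right)$, $z=x+iy$, in $D_1$, where $f$ denotes its holomorphic extension.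
   Context: $\operatorname{sign}(U)$ equals $1$ if $U>0$, $-1$ if $U<0$, $0$ if $U=0$. Thus the equation is the Laplace equation where $U>0$ and the wave equation where $U<0$. The lines $y=-x-1$ and $y=x-1$ are characteristics of the wave equation. *)

From Stdlib Require Import Reals.
From Coquelicot Require Import Coquelicot.
Open Scope R_scope.

Definition sgn (u : R) : R := if Rlt_dec 0 u then 1 else if Rlt_dec u 0 then -1 else 0.

Definition analytic_at (f : R -> R) (x0 : R) : Prop :=
  exists (a : nat -> R) (r : R), 0 < r /\
    forall x, Rabs (x - x0) < r -> is_pseries a (x - x0) (f x).

Definition analytic_near_m10 (f : R -> R) : Prop :=
  exists eps, 0 < eps /\ forall x, -1 - eps < x < eps -> analytic_at f x.

Definition open2 (S : R -> R -> Prop) : Prop :=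
  forall x y, S x y -> exists e, 0 < e /\
    forall u v, (u - x)^2 + (v - y)^2 < e^2 -> S u v.

Definition connected2 (S : R -> R -> Prop) : Prop :=
  ~ exists A B : R -> R -> Prop,
      open2 A /\ open2 B /\
      (forall x y, S x y -> A x y \/ B x y) /\
      (forall x y, S x y -> A x y -> B x y -> False) /\
      (exists x y, S x y /\ A x y) /\ (exists x y, S x y /\ B x y).

Definition domain2 (S : R -> R -> Prop) : Prop :=
  (exists x y, S x y) /\ open2 S /\ connected2 S.

Definition cont2 (g : R -> R -> R) (x y : R) : Prop :=
  continuous (fun p : R * R => g (fst p) (snd p)) (x, y).

Definition dx (g : R -> R -> R) : R -> R -> R := fun x y => Derive (fun t => g t y) x.
Definition dy (g : R -> R -> R) : R -> R -> R := fun x y => Derive (fun t => g x t) y.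

Definition C1on (S : R -> R -> Prop) (g : R -> R -> R) : Prop :=
  forall x y, S x y ->
    ex_derive (fun t => g t y) x /\ ex_derive (fun t => g x t) y /\
    cont2 g x y /\ cont2 (dx g) x y /\ cont2 (dy g) x y.

Definition C2on (S : R -> R -> Prop) (g : R -> R -> R) : Prop :=
  C1on S g /\ C1on S (dx g) /\ C1on S (dy g).

Definition D2 (x y : R) : Prop := y < 0 /\ x - 1 < y /\ - x - 1 < y.

Definition Seg (x y : R) : Prop := y = 0 /\ -1 < x < 1.

Definition holo_at (g : C -> C) (w : C) : Prop :=
  exists l : C, @is_derive C_AbsRing C_NormedModule g w l.

(* Let g be the holomorphic extension of f near [-1, 0] and put U(x, y) = f((x-y-1)/2) - f((x+y-1)/2)
   for y <= 0 and U(x, y) = i (g(w) - g(conj w)) = -2 Im g(w), w = ((x + i y) - 1)/2, for y > 0.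
   Below the axis U is a d'Alembert solution of the wave equation; above it U is the real part of
   a holomorphic function of an affine argument, hence harmonic. Both formulas give 0 on the axis,
   and both y-derivatives equal -f'((x-1)/2) there, so U is C^1 across it. Since f' < 0, the mean
   value theorem makes U negative in D2, while U ~ -y f'((x-1)/2) > 0 just above the axis; D1 is
   the union of the small squares above the segment on which U > 0. Finally U(x, -x-1) =
   f(x) - f(-1) = f(x).

   All smoothness is obtained from explicit quadratic remainder bounds for power series, summed
   componentwise in the complex plane; g(w) is the Taylor series of f at Re w evaluated at i Im w. *)

From Stdlib Require Import Reals Lra Lia Psatz Factorial List Classical ClassicalEpsilon.
From Coquelicot Require Import Coquelicot.
Open Scope R_scope.

(** * Finite sums and series *)

Fixpoint rsum (u : nat -> R) (N : nat) : R :=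
  match N with O => 0 | S n => rsum u n + u n end.

Fixpoint csum (u : nat -> C) (N : nat) : C :=
  match N with O => RtoC 0 | S n => Cplus (csum u n) (u n) end.

Lemma sum_n_rsum (a : nat -> R) N : sum_n a N = rsum a (S N).
Proof.
  induction N.
  - rewrite sum_O. simpl. ring.
  - rewrite sum_Sn, IHN. simpl. unfold plus; simpl. ring.
Qed.

Lemma is_series_rsum (a : nat -> R) l :
  (forall eps : posreal, exists N0, forall N, (N0 <= N)%nat -> Rabs (rsum a N - l) < eps) ->
  is_series a l.
Proof.
  intros H.
  assert (is_lim_seq (sum_n a) l).
  { apply is_lim_seq_spec. intros eps. destruct (H eps) as [N0 HN].
    exists N0. intros n Hn. rewrite sum_n_rsum. apply HN. lia. }
  exact H0.
Qed.

Lemma rsum_cvg_Series (a : nat -> R) : ex_series a ->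
  forall eps : posreal, exists N0, forall N, (N0 <= N)%nat -> Rabs (rsum a N - Series a) < eps.
Proof.
  intros Ha eps.
  assert (H : is_lim_seq (sum_n a) (Series a)) by (apply Series_correct; auto).
  apply is_lim_seq_spec in H. destruct (H eps) as [N0 HN].
  exists (S N0). intros N HN'. destruct N. lia.
  rewrite <- sum_n_rsum. apply HN. lia.
Qed.

Lemma rsum_ext u v N : (forall k, (k < N)%nat -> u k = v k) -> rsum u N = rsum v N.
Proof. induction N; intros H; simpl; auto. rewrite IHN, H; auto. Qed.

Lemma rsum_const0 N : rsum (fun _ => 0) N = 0.
Proof. induction N; simpl; lra. Qed.

Lemma rsum_le u v N : (forall k, (k < N)%nat -> u k <= v k) -> rsum u N <= rsum v N.
Proof. induction N; intros H; simpl. lra. assert (u N <= v N) by auto.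
  assert (rsum u N <= rsum v N) by (apply IHN; auto). lra. Qed.

Lemma rsum_nonneg u N : (forall k, 0 <= u k) -> 0 <= rsum u N.
Proof. intros H; induction N; simpl. lra. specialize (H N). lra. Qed.

Lemma rsum_scal c u N : rsum (fun k => c * u k) N = c * rsum u N.
Proof. induction N; simpl. ring. rewrite IHN. ring. Qed.

Lemma rsum_monotone u N M : (forall k, 0 <= u k) -> (N <= M)%nat -> rsum u N <= rsum u M.
Proof. intros H HNM. induction HNM. lra. simpl. specialize (H m). lra. Qed.

Lemma rsum_le_Series u N : (forall k, 0 <= u k) -> ex_series u -> rsum u N <= Series u.
Proof.
  intros H Hu.
  destruct (Rle_lt_dec (rsum u N) (Series u)) as [h|h]; auto.
  exfalso. set (e := rsum u N - Series u).
  assert (He : 0 < e) by (unfold e; lra).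
  destruct (rsum_cvg_Series u Hu (mkposreal e He)) as [N0 HN]. simpl in HN.
  specialize (HN (max N0 N) (Nat.le_max_l _ _)).
  assert (rsum u N <= rsum u (max N0 N)) by (apply rsum_monotone; auto; lia).
  apply Rabs_def2 in HN. unfold e in HN. lra.
Qed.

Lemma Series_zero : Series (fun _ => 0) = 0.
Proof. rewrite (Series_ext _ (fun _ => 0 * 0)) by (intros; ring). rewrite Series_scal_l. ring. Qed.

Lemma ex_series_Rabs_le (u b : nat -> R) : (forall k, Rabs (u k) <= b k) -> ex_series b -> ex_series u.
Proof.
  intros H Hb. apply (@ex_series_le R_AbsRing R_CompleteNormedModule u b); auto.
Qed.

Lemma Series_tail_le (u b : nat -> R) N :
  (forall k, Rabs (u k) <= b k) -> ex_series b ->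
  ex_series u /\ Rabs (Series u - rsum u N) <= Series b - rsum b N.
Proof.
  intros Hub Hb.
  assert (Hu : ex_series u) by (apply (ex_series_Rabs_le u b); auto).
  split; auto.
  destruct (Rle_lt_dec (Rabs (Series u - rsum u N)) (Series b - rsum b N)) as [h|h]; auto.
  exfalso. set (e := (Rabs (Series u - rsum u N) - (Series b - rsum b N)) / 2).
  assert (He : 0 < e) by (unfold e; lra).
  destruct (rsum_cvg_Series u Hu (mkposreal e He)) as [N1 H1].
  destruct (rsum_cvg_Series b Hb (mkposreal e He)) as [N2 H2]. simpl in *.
  set (M := max N (max N1 N2)).
  specialize (H1 M ltac:(unfold M; lia)). specialize (H2 M ltac:(unfold M; lia)).
  assert (HM : (N <= M)%nat) by (unfold M; lia).
  assert (HD : Rabs (rsum u M - rsum u N) <= rsum b M - rsum b N).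
  { clear -HM Hub. induction HM. rewrite Rminus_eq_0, Rabs_R0. lra.
    simpl. replace (rsum u m + u m - rsum u N) with ((rsum u m - rsum u N) + u m) by ring.
    eapply Rle_trans. apply Rabs_triang. specialize (Hub m). lra. }
  apply Rabs_def2 in H2.
  assert (HT : Rabs (Series u - rsum u N) <= Rabs (Series u - rsum u M) + Rabs (rsum u M - rsum u N)).
  { replace (Series u - rsum u N) with ((Series u - rsum u M) + (rsum u M - rsum u N)) by ring.
    apply Rabs_triang. }
  rewrite (Rabs_minus_sym (rsum u M)) in H1.
  unfold e in *. clearbody M. lra.
Qed.

Lemma Series_tail_small (b : nat -> R) : ex_series b ->
  forall eps : posreal, exists N0, forall N, (N0 <= N)%nat -> Series b - rsum b N < eps.
Proof.
  intros Hb eps. destruct (rsum_cvg_Series b Hb eps) as [N0 H]. exists N0. intros N HN.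
  specialize (H N HN). apply Rabs_def2 in H. lra.
Qed.

Lemma le_of_le_plus_vanishing x y (e : nat -> R) :
  (forall eps : posreal, exists N, e N < eps) ->
  (forall N, x <= y + e N) -> x <= y.
Proof.
  intros He H. destruct (Rle_lt_dec x y) as [h|h]; auto. exfalso.
  destruct (He (mkposreal (x - y) ltac:(lra))) as [N HN]. simpl in HN.
  specialize (H N). lra.
Qed.

Lemma C_ReIm_eq (z w : C) : Re z = Re w -> Im z = Im w -> z = w.
Proof. destruct z, w; simpl; intros; subst; auto. Qed.

Lemma Cmod_le_Re_Im (z : C) : Cmod z <= Rabs (Re z) + Rabs (Im z).
Proof.
  destruct z as [x y]. unfold Cmod, Re, Im; cbn [fst snd].
  rewrite <- (sqrt_pow2 (Rabs x + Rabs y)) by (pose proof (Rabs_pos x); pose proof (Rabs_pos y); lra).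
  apply sqrt_le_1_alt.
  pose proof (Rabs_pos x); pose proof (Rabs_pos y).
  rewrite <- (pow2_abs x), <- (pow2_abs y). nra.
Qed.

Lemma Rabs_Im_le_Cmod z : Rabs (Im z) <= Cmod z.
Proof. destruct z as [x y]. unfold Cmod, Im; cbn [fst snd].
  rewrite <- sqrt_Rsqr_abs. apply sqrt_le_1_alt. unfold Rsqr. nra. Qed.

Lemma Re_minus (x y : C) : Re (x - y)%C = Re x - Re y.
Proof. destruct x, y; simpl; ring. Qed.
Lemma Im_minus (x y : C) : Im (x - y)%C = Im x - Im y.
Proof. destruct x, y; simpl; ring. Qed.

Lemma Re_csum u N : Re (csum u N) = rsum (fun k => Re (u k)) N.
Proof. induction N; simpl. auto. rewrite <- IHN. reflexivity. Qed.
Lemma Im_csum u N : Im (csum u N) = rsum (fun k => Im (u k)) N.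
Proof. induction N; simpl. auto. rewrite <- IHN. reflexivity. Qed.

Lemma Cmod_csum u N : Cmod (csum u N) <= rsum (fun k => Cmod (u k)) N.
Proof. induction N; simpl. rewrite Cmod_0; lra.
  eapply Rle_trans. apply Cmod_triangle. lra. Qed.

Lemma csum_ext u v N : (forall k, (k < N)%nat -> u k = v k) -> csum u N = csum v N.
Proof. induction N; intros H; simpl; auto. rewrite IHN, H; auto. Qed.

Lemma csum_plus u v N : csum (fun k => (u k + v k)%C) N = (csum u N + csum v N)%C.
Proof. induction N; simpl. ring. rewrite IHN. ring. Qed.

Lemma csum_scal c u N : csum (fun k => (c * u k)%C) N = (c * csum u N)%C.
Proof. induction N; simpl. ring. rewrite IHN. ring. Qed.

Lemma csum_exchange (u : nat -> nat -> C) N M :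
  csum (fun n => csum (u n) M) N = csum (fun k => csum (fun n => u n k) N) M.
Proof.
  induction N; simpl.
  - induction M; simpl; auto. rewrite <- IHM. ring.
  - rewrite IHN. rewrite <- csum_plus. reflexivity.
Qed.

Lemma csum_Sl u M : csum u (S M) = (u O + csum (fun k => u (S k)) M)%C.
Proof. induction M. simpl. ring. simpl in *. rewrite IHM. ring. Qed.

Lemma csum_RtoC u N : csum (fun k => RtoC (u k)) N = RtoC (rsum u N).
Proof. induction N; simpl. auto. rewrite IHN. rewrite RtoC_plus. reflexivity. Qed.

(** * Complex power series with real coefficients *)

(* Coquelicot's [Series] is real-valued, so a complex series is summed componentwise. *)
Definition cps_term (a : nat -> R) (z : C) (k : nat) : C := (RtoC (a k) * z ^ k)%C.
Definition CPSeries (a : nat -> R) (z : C) : C :=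
  (Series (fun k => Re (cps_term a z k)), Series (fun k => Im (cps_term a z k))).

Lemma Cmod_cps_term a z k : Cmod (cps_term a z k) = Rabs (a k) * Cmod z ^ k.
Proof. unfold cps_term. rewrite Cmod_mult, Cmod_R, Cmod_pow. auto. Qed.

Lemma CPSeries_ext a b z : (forall k, a k = b k) -> CPSeries a z = CPSeries b z.
Proof. intros H. unfold CPSeries, cps_term. f_equal; apply Series_ext; intros k; rewrite H; auto. Qed.

Definition abs_term (a : nat -> R) (R0 : R) (k : nat) : R := Rabs (a k) * R0 ^ k.

Lemma Cmod_cps_term_le a z R0 k : Cmod z <= R0 -> Cmod (cps_term a z k) <= abs_term a R0 k.
Proof. intros H. rewrite Cmod_cps_term. unfold abs_term. apply Rmult_le_compat_l. apply Rabs_pos.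
  apply pow_incr. split; auto. apply Cmod_ge_0. Qed.

Lemma Cmod_CPSeries_sub_csum_le a z R0 N :
  ex_series (abs_term a R0) -> Cmod z <= R0 ->
  Cmod (CPSeries a z - csum (cps_term a z) N)%C <=
    2 * (Series (abs_term a R0) - rsum (abs_term a R0) N).
Proof.
  intros Hb Hz.
  eapply Rle_trans. apply Cmod_le_Re_Im.
  destruct (Series_tail_le (fun k => Re (cps_term a z k)) (abs_term a R0) N) as [_ H1]; auto.
  { intros k. eapply Rle_trans. apply re_le_Cmod. apply Cmod_cps_term_le; auto. }
  destruct (Series_tail_le (fun k => Im (cps_term a z k)) (abs_term a R0) N) as [_ H2]; auto.
  { intros k. eapply Rle_trans. apply Rabs_Im_le_Cmod. apply Cmod_cps_term_le; auto. }
  replace (Re (CPSeries a z - csum (cps_term a z) N)%C) with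
    (Series (fun k => Re (cps_term a z k)) - rsum (fun k => Re (cps_term a z k)) N).
  replace (Im (CPSeries a z - csum (cps_term a z) N)%C) with
    (Series (fun k => Im (cps_term a z k)) - rsum (fun k => Im (cps_term a z k)) N).
  lra.
  - rewrite Im_minus, <- Im_csum. reflexivity.
  - rewrite Re_minus, <- Re_csum. reflexivity.
Qed.

Lemma Cmod_CPSeries_le a z R0 : ex_series (abs_term a R0) -> Cmod z <= R0 ->
  Cmod (CPSeries a z) <= 2 * Series (abs_term a R0).
Proof.
  intros Hb Hz. pose proof (Cmod_CPSeries_sub_csum_le a z R0 0 Hb Hz).
  replace (csum (cps_term a z) 0) with (RtoC 0) in H by reflexivity.
  replace (CPSeries a z - RtoC 0)%C with (CPSeries a z) in H by ring. simpl rsum in H. lra.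
Qed.

Lemma ex_series_abs_term a R0 : 0 <= R0 -> Rbar_lt R0 (CV_radius a) -> ex_series (abs_term a R0).
Proof.
  intros H0 H. assert (Rbar_lt (Rabs R0) (CV_radius a)) by (rewrite Rabs_pos_eq; auto).
  pose proof (CV_disk_inside a R0 H1).
  eapply ex_series_ext; [|exact H2]. intros n. simpl. unfold abs_term.
  rewrite Rabs_mult, <- RPow_abs, (Rabs_pos_eq R0); auto.
Qed.

Definition pow_rem (z h : C) (k : nat) : C :=
  ((z + h) ^ k - z ^ k - RtoC (INR k) * z ^ (pred k) * h)%C.

Lemma pow_rem_SS z h k :
  pow_rem z h (S (S k)) = ((z + h) * pow_rem z h (S k) + RtoC (INR (S k)) * z ^ k * (h * h))%C.
Proof.
  unfold pow_rem. simpl pred. rewrite !S_INR, !RtoC_plus. simpl Cpow. ring.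
Qed.

Lemma Cmod_pow_rem_le z h R0 : Cmod z <= R0 -> Cmod (z + h)%C <= R0 ->
  forall k, Cmod (pow_rem z h (S (S k))) <= (INR k + 2) ^ 2 * R0 ^ k * Cmod h ^ 2.
Proof.
  intros Hz Hzh. assert (HR : 0 <= R0) by (pose proof (Cmod_ge_0 z); lra).
  induction k.
  - unfold pow_rem. simpl.
    replace ((z + h) * ((z + h) * 1) - z * (z * 1) - RtoC (1 + 1) * (z * 1) * h)%C
      with (h * h)%C by (rewrite RtoC_plus; ring).
    rewrite Cmod_mult. simpl. pose proof (Cmod_ge_0 h). nra.
  - rewrite pow_rem_SS. eapply Rle_trans. apply Cmod_triangle.
    rewrite !Cmod_mult, Cmod_R, Cmod_pow. rewrite Rabs_pos_eq by (apply pos_INR).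
    pose proof (Cmod_ge_0 h). pose proof (Cmod_ge_0 (z+h)%C). pose proof (pos_INR k).
    pose proof (Cmod_ge_0 (pow_rem z h (S (S k)))). pose proof (Cmod_ge_0 z).
    assert (Hp : Cmod z ^ k <= R0 ^ k) by (apply pow_incr; split; auto).
    assert (Hp0 : 0 <= R0 ^ k) by (apply pow_le; auto).
    assert (Hp1 : 0 <= Cmod z ^ k) by (apply pow_le; auto).
    rewrite !S_INR.
    change (Cmod z ^ S k) with (Cmod z * Cmod z ^ k).
    change (R0 ^ S k) with (R0 * R0 ^ k).
    assert (HA : Cmod (z + h)%C * Cmod (pow_rem z h (S (S k))) <=
      R0 * ((INR k + 2) ^ 2 * R0 ^ k * Cmod h ^ 2)).
    { apply Rmult_le_compat; auto. }
    assert (HB : Cmod z * Cmod z ^ k <= R0 * R0 ^ k) by (apply Rmult_le_compat; auto).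
    assert (HC : (INR k + 1 + 1) * (Cmod z * Cmod z ^ k) * (Cmod h * Cmod h) <=
                 (INR k + 2) * (R0 * R0 ^ k) * (Cmod h ^ 2)).
    { replace (INR k + 1 + 1) with (INR k + 2) by ring. simpl pow. rewrite Rmult_1_r.
      apply Rmult_le_compat_r. nra. apply Rmult_le_compat_l; lra. }
    assert (HD : 0 <= R0 * R0 ^ k * Cmod h ^ 2) by (apply Rmult_le_pos; [nra| apply pow2_ge_0]).
    nra.
Qed.

(* [pow_rem_coef a R0 k * |h|^2] majorizes [|a k * pow_rem z h k|] when [|z|, |z + h| <= R0]. *)
Definition pow_rem_coef (a : nat -> R) (R0 : R) (k : nat) : R :=
  match k with O => 0 | S O => 0 | S (S j) => Rabs (a k) * ((INR j + 2) ^ 2 * R0 ^ j) end.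

Lemma INR_fact_SS j : INR (fact (j + 2)) = (INR j + 2) * (INR j + 1) * INR (fact j).
Proof. replace (j + 2)%nat with (S (S j)) by lia.
  rewrite !fact_simpl, !mult_INR, !S_INR. ring. Qed.

Lemma ex_series_pow_rem_coef a R0 : 0 <= R0 -> Rbar_lt R0 (CV_radius a) ->
  ex_series (pow_rem_coef a R0).
Proof.
  intros H0 H. apply ex_series_incr_1, ex_series_incr_1.
  pose proof (ex_series_abs_term (PS_derive_n 2 a) R0 H0 ltac:(rewrite CV_radius_derive_n; auto)).
  apply (ex_series_Rabs_le _ (fun n => 2 * abs_term (PS_derive_n 2 a) R0 n)).
  2: { eapply ex_series_ext; [| apply (@ex_series_scal_l R_AbsRing R_NormedModule 2 _ H1)].
        intros n; reflexivity. }
  intros n. simpl pow_rem_coef. unfold abs_term, PS_derive_n.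
  rewrite INR_fact_SS. pose proof (INR_fact_lt_0 n). pose proof (pos_INR n).
  replace ((INR n + 2) * (INR n + 1) * INR (fact n) / INR (fact n) * a (n + 2)%nat)
    with ((INR n + 2) * (INR n + 1) * a (n+2)%nat) by (field; lra).
  replace (n + 2)%nat with (S (S n)) by lia.
  rewrite Rabs_pos_eq.
  2: { apply Rmult_le_pos. apply Rabs_pos. apply Rmult_le_pos. nra. apply pow_le; auto. }
  rewrite !Rabs_mult, (Rabs_pos_eq (INR n + 2)), (Rabs_pos_eq (INR n + 1)) by lra.
  pose proof (Rabs_pos (a (S (S n)))). pose proof (pow_le R0 n H0).
  assert (0 <= Rabs (a (S (S n))) * R0 ^ n) by nra.
  set (P := Rabs (a (S (S n))) * R0 ^ n) in *.
  assert (HQ : (INR n + 2) ^ 2 <= 2 * ((INR n + 2) * (INR n + 1))) by nra.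
  assert (HQ2 : (INR n + 2) ^ 2 * P <= 2 * ((INR n + 2) * (INR n + 1)) * P) by
    (apply Rmult_le_compat_r; auto).
  unfold P in *. nra.
Qed.

Lemma csum_pow_rem a z h N :
  (csum (cps_term a (z + h)) (S N) - csum (cps_term a z) (S N) - h
    * csum (cps_term (PS_derive a) z) N)%C
  = csum (fun k => RtoC (a k) * pow_rem z h k)%C (S N).
Proof.
  induction N.
  - unfold cps_term, pow_rem. simpl. ring.
  - change (csum (cps_term a (z + h)) (S (S N))) with
    (csum (cps_term a (z + h)) (S N) + cps_term a (z+h) (S N))%C.
    change (csum (cps_term a z) (S (S N))) with (csum (cps_term a z) (S N) + cps_term a z (S N))%C.
    change (csum (cps_term (PS_derive a) z) (S N)) with
      (csum (cps_term (PS_derive a) z) N + cps_term (PS_derive a) z N)%C.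
    change (csum (fun k => RtoC (a k) * pow_rem z h k)%C (S (S N))) with
      (csum (fun k => RtoC (a k) * pow_rem z h k)%C (S N) + RtoC (a (S N)) * pow_rem z h (S N))%C.
    rewrite <- IHN. unfold cps_term, pow_rem, PS_derive. simpl pred. rewrite RtoC_mult. ring.
Qed.

Definition rem_const a R0 := Series (pow_rem_coef a R0).

Lemma pow_rem_coef_ge0 a R0 k : 0 <= R0 -> 0 <= pow_rem_coef a R0 k.
Proof. intros H. destruct k as [|[|j]]; simpl; try lra.
  apply Rmult_le_pos. apply Rabs_pos. apply Rmult_le_pos. apply pow2_ge_0. apply pow_le; auto. Qed.

Lemma Cmod_coef_pow_rem_le a z h R0 k : Cmod z <= R0 -> Cmod (z + h)%C <= R0 ->
  Cmod (RtoC (a k) * pow_rem z h k)%C <= pow_rem_coef a R0 k * Cmod h ^ 2.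
Proof.
  intros Hz Hzh. assert (HR : 0 <= R0) by (pose proof (Cmod_ge_0 z); lra).
  destruct k as [|[|j]].
  - unfold pow_rem. simpl. replace (1 - 1 - RtoC 0 * 1 * h)%C with (RtoC 0) by ring.
    rewrite Cmult_0_r, Cmod_0. lra.
  - unfold pow_rem. simpl. replace ((z + h) * 1 - z * 1 - RtoC 1 * 1 * h)%C with (RtoC 0) by ring.
    rewrite Cmult_0_r, Cmod_0. lra.
  - rewrite Cmod_mult, Cmod_R.
    change (pow_rem_coef a R0 (S (S j))) with (Rabs (a (S (S j))) * ((INR j + 2) ^ 2 * R0 ^ j)).
    pose proof (Cmod_pow_rem_le z h R0 Hz Hzh j).
    pose proof (Rabs_pos (a (S (S j)))).
    replace (Rabs (a (S (S j))) * ((INR j + 2) ^ 2 * R0 ^ j) * Cmod h ^ 2) with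
      (Rabs (a (S (S j))) * ((INR j + 2) ^ 2 * R0 ^ j * Cmod h ^ 2)) by ring.
    apply Rmult_le_compat_l; auto.
Qed.

Lemma two_tails_small (b1 b2 : nat -> R) (c : R) : ex_series b1 -> ex_series b2 -> 0 <= c ->
  forall eps : posreal, exists N,
    4 * (Series b1 - rsum b1 (S N)) + 2 * c * (Series b2 - rsum b2 N) < eps.
Proof.
  intros H1 H2 Hc eps.
  destruct (Series_tail_small b1 H1 (mkposreal (eps / 8) ltac:(pose proof (cond_pos eps); lra)))
    as [N1 HN1].
  destruct (Series_tail_small b2 H2 (mkposreal (eps / (4 * (c + 1))) ltac:(pose proof (cond_pos eps);
    apply Rdiv_lt_0_compat; lra))) as [N2 HN2].
  simpl in *. exists (max N1 N2).
  specialize (HN1 (S (max N1 N2)) ltac:(lia)). specialize (HN2 (max N1 N2) ltac:(lia)).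
  simpl rsum in HN1 |- *.
  assert (HT2 : 0 <= Series b2 - rsum b2 (max N1 N2) \/ Series b2 - rsum b2 (max N1 N2) < 0) by lra.
  destruct HT2 as [HT2|HT2].
  - assert (c * (Series b2 - rsum b2 (max N1 N2)) <= (c + 1) * (eps / (4 * (c + 1)))).
    { apply Rmult_le_compat; lra. }
    replace ((c + 1) * (eps / (4 * (c + 1)))) with (eps / 4) in H by (field; lra). lra.
  - assert (c * (Series b2 - rsum b2 (max N1 N2)) <= 0) by nra. pose proof (cond_pos eps). lra.
Qed.

Lemma CPSeries_taylor1_le a z h R0 : 0 <= R0 -> Rbar_lt R0 (CV_radius a) -> Cmod z + Cmod h <= R0 ->
  Cmod (CPSeries a (z + h) - CPSeries a z - h * CPSeries (PS_derive a) z)%C <=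
    rem_const a R0 * Cmod h ^ 2.
Proof.
  intros H0 Hr Hzh.
  assert (Hz : Cmod z <= R0) by (pose proof (Cmod_ge_0 h); lra).
  assert (Hz2 : Cmod (z + h)%C <= R0) by (pose proof (Cmod_triangle z h); lra).
  pose proof (ex_series_abs_term a R0 H0 Hr) as Ha.
  pose proof (ex_series_abs_term (PS_derive a) R0 H0 ltac:(rewrite CV_radius_derive; auto)) as Ha'.
  pose proof (ex_series_pow_rem_coef a R0 H0 Hr) as Hc2.
  apply (le_of_le_plus_vanishing _ _
    (fun N => 4 * (Series (abs_term a R0) - rsum (abs_term a R0) (S N)) +
            2 * Cmod h * (Series (abs_term (PS_derive a) R0) - rsum (abs_term (PS_derive a) R0) N))).
  { apply two_tails_small; auto. apply Cmod_ge_0. }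
  intros N.
  pose proof (csum_pow_rem a z h N) as HF.
  set (Y := csum (fun k => RtoC (a k) * pow_rem z h k)%C (S N)) in *.
  assert (HY : Cmod Y <= rem_const a R0 * Cmod h ^ 2).
  { unfold Y. eapply Rle_trans. apply Cmod_csum.
    eapply Rle_trans. apply rsum_le. intros k _. apply (Cmod_coef_pow_rem_le a z h R0 k Hz Hz2).
    rewrite (Rmult_comm (rem_const a R0)).
    replace (rsum (fun k => pow_rem_coef a R0 k * Cmod h ^ 2) (S N)) with
      (Cmod h ^ 2 * rsum (pow_rem_coef a R0) (S N)) by (rewrite <- rsum_scal; apply rsum_ext;
        intros; ring).
    apply Rmult_le_compat_l. apply pow2_ge_0. apply rsum_le_Series; auto.
    intros; apply pow_rem_coef_ge0; auto. }
  pose proof (Cmod_CPSeries_sub_csum_le a (z + h)%C R0 (S N) Ha Hz2) as P1.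
  pose proof (Cmod_CPSeries_sub_csum_le a z R0 (S N) Ha Hz) as P2.
  pose proof (Cmod_CPSeries_sub_csum_le (PS_derive a) z R0 N Ha' Hz) as P3.
  replace (CPSeries a (z + h) - CPSeries a z - h * CPSeries (PS_derive a) z)%C with
    ((CPSeries a (z + h) - csum (cps_term a (z + h)) (S N)) - (CPSeries a z - csum (cps_term a z) (S N))
     - h * (CPSeries (PS_derive a) z - csum (cps_term (PS_derive a) z) N) + Y)%C
    by (rewrite <- HF; ring).
  eapply Rle_trans. apply Cmod_triangle.
  eapply Rle_trans. apply Rplus_le_compat_r. apply Cmod_triangle.
  eapply Rle_trans. apply Rplus_le_compat_r. apply Rplus_le_compat_r. apply Cmod_triangle.
  rewrite Cmod_opp, Cmod_opp, Cmod_mult.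
  pose proof (Cmod_ge_0 h).
  assert (Cmod h * Cmod (CPSeries (PS_derive a) z - csum (cps_term (PS_derive a) z) N)%C <=
          Cmod h * (2 * (Series (abs_term (PS_derive a) R0) - rsum (abs_term (PS_derive a) R0) N))).
  { apply Rmult_le_compat_l; auto. }
  lra.
Qed.

(** * Re-expansion about a new centre *)

Definition binom (k n : nat) : R := if (n <=? k)%nat then Binomial.C k n else 0.

Lemma Binomial_C_n0 n : Binomial.C n 0 = 1.
Proof. unfold Binomial.C. rewrite Nat.sub_0_r. simpl. field. apply INR_fact_neq_0. Qed.
Lemma Binomial_C_nn n : Binomial.C n n = 1.
Proof. unfold Binomial.C. rewrite Nat.sub_diag. simpl. field. apply INR_fact_neq_0. Qed.

Lemma binom_0 k : binom k 0 = 1.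
Proof. unfold binom. simpl. apply Binomial_C_n0. Qed.

Lemma binom_gt k n : (k < n)%nat -> binom k n = 0.
Proof. intros H. unfold binom. destruct (Nat.leb_spec n k); auto. lia. Qed.

Lemma binom_pascal k n : binom (S k) (S n) = binom k n + binom k (S n).
Proof.
  unfold binom. destruct (Nat.leb_spec (S n) (S k)); destruct (Nat.leb_spec n k);
    destruct (Nat.leb_spec (S n) k); try lia.
  - rewrite pascal by lia. reflexivity.
  - assert (n = k) by lia. subst. rewrite !Binomial_C_nn. ring.
  - ring.
Qed.

Lemma binom_ge0 k n : 0 <= binom k n.
Proof. unfold binom. destruct (n <=? k)%nat; try lra. unfold Binomial.C.
  apply Rmult_le_pos. apply pos_INR. left. apply Rinv_0_lt_compat.
  apply Rmult_lt_0_compat; apply INR_fact_lt_0. Qed.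

Lemma csum_eq_head u M : (1 <= M)%nat -> (forall n, (0 < n)%nat -> u n = RtoC 0) -> csum u M = u O.
Proof.
  intros HM Hu. destruct M. lia. rewrite csum_Sl.
  rewrite (csum_ext _ (fun _ => RtoC 0)). 2: { intros; apply Hu; lia. }
  assert (forall N, csum (fun _ => RtoC 0) N = RtoC 0). { induction N; simpl; auto. rewrite IHN. ring. }
  rewrite H. ring.
Qed.

Lemma Cpow_plus_binom (d h : C) k M : (k < M)%nat ->
  ((d + h) ^ k)%C = csum (fun n => RtoC (binom k n) * d ^ (k - n) * h ^ n)%C M.
Proof.
  revert M. induction k; intros M HM.
  - rewrite csum_eq_head; auto. simpl. rewrite binom_0. ring.
    intros n Hn. rewrite binom_gt by lia. ring.
  - destruct M as [|M']. lia.
    rewrite csum_Sl. rewrite binom_0. rewrite Nat.sub_0_r.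
    rewrite (csum_ext _ (fun m => (RtoC (binom k m) * d ^ (k - m) * h ^ m * h +
                                   RtoC (binom k (S m)) * d ^ (k - m) * h ^ (S m)))%C).
    2: { intros m _. rewrite binom_pascal. simpl Nat.sub. rewrite RtoC_plus. simpl Cpow. ring. }
    rewrite csum_plus.
    assert (E1 : csum (fun m => (RtoC (binom k m) * d ^ (k - m) * h ^ m) * h)%C M' =
      (h * (d + h) ^ k)%C).
    { rewrite (IHk M') by lia. rewrite <- csum_scal. apply csum_ext. intros; ring. }
    rewrite E1.
    assert (E2 : (d * (d + h) ^ k)%C =
      (d ^ S k + csum (fun m => RtoC (binom k (S m)) * d ^ (k - m) * h ^ S m)%C M')%C).
    { rewrite (IHk (S M')) by lia. rewrite <- csum_scal. rewrite csum_Sl.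
      rewrite binom_0, Nat.sub_0_r. f_equal. change (d ^ S k)%C with (d * d ^ k)%C. ring.
      apply csum_ext. intros m _.
      destruct (Nat.le_gt_cases (S m) k).
      + replace (k - m)%nat with (S (k - S m)) by lia. simpl Cpow. ring.
      + rewrite binom_gt by lia. ring. }
    simpl Cpow at 1. rewrite Cmult_plus_distr_r, E2. ring.
Qed.

Lemma pow_plus_binom (x y : R) k M : (k < M)%nat ->
  (x + y) ^ k = rsum (fun n => binom k n * x ^ (k - n) * y ^ n) M.
Proof.
  intros H. apply RtoC_inj. rewrite <- csum_RtoC, RtoC_pow, RtoC_plus.
  rewrite (Cpow_plus_binom (RtoC x) (RtoC y) k M H). apply csum_ext. intros.
  rewrite !RtoC_mult, !RtoC_pow. reflexivity.
Qed.

Lemma CV_radius_abs a : CV_radius (fun k => Rabs (a k)) = CV_radius a.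
Proof.
  pose proof (CV_radius_bounded (fun k => Rabs (a k))) as H1.
  pose proof (CV_radius_bounded a) as H2.
  apply (is_lub_Rbar_eqset _ (fun r : R => exists M : R, forall n : nat,
    Rabs (Rabs (a n) * r ^ n) <= M)) in H2.
  2: { intros x. split; intros [M HM]; exists M; intros n; specialize (HM n);
       rewrite Rabs_mult, Rabs_Rabsolu, <- Rabs_mult in *; auto. }
  apply is_lub_Rbar_unique in H1. apply is_lub_Rbar_unique in H2. congruence.
Qed.

Lemma is_series_tail (u : nat -> R) (N : nat) : ex_series u ->
  is_series (fun k => if (N <=? k)%nat then u k else 0) (Series u - rsum u N).
Proof.
  intros Hu. apply (is_series_rsum (fun k => if (N <=? k)%nat then u k else 0)). intros eps.
  destruct (rsum_cvg_Series u Hu eps) as [N0 HN0]. exists (max N N0). intros M HM.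
  assert (E : rsum (fun k => if (N <=? k)%nat then u k else 0) M = rsum u M - rsum u N).
  { assert (HNM : (N <= M)%nat) by lia. clear -HNM. induction HNM.
    - rewrite (rsum_ext _ (fun _ => 0)).
      2: { intros k Hk. destruct (Nat.leb_spec N k); [lia | reflexivity]. }
      rewrite rsum_const0. ring.
    - simpl. rewrite IHHNM. destruct (Nat.leb_spec N m); try lia. ring. }
  rewrite E. specialize (HN0 M ltac:(lia)).
  replace (rsum u M - rsum u N - (Series u - rsum u N)) with (rsum u M - Series u) by ring. auto.
Qed.

Lemma Series_tail (u : nat -> R) (N : nat) : ex_series u ->
  ex_series (fun k => if (N <=? k)%nat then u k else 0) /\
  Series (fun k => if (N <=? k)%nat then u k else 0) = Series u - rsum u N.
Proof. intros H. pose proof (is_series_tail u N H). split. eexists; eauto.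
  apply is_series_unique; auto. Qed.

Lemma Series_rsum (w : nat -> nat -> R) N : (forall n, ex_series (w n)) ->
  ex_series (fun k => rsum (fun n => w n k) N) /\
  rsum (fun n => Series (w n)) N = Series (fun k => rsum (fun n => w n k) N).
Proof.
  intros Hw. induction N.
  - simpl. split. exists 0. apply is_series_rsum. intros eps. exists O. intros.
    rewrite rsum_const0, Rminus_0_r, Rabs_R0. apply cond_pos.
    symmetry. apply Series_zero.
  - destruct IHN as [IH1 IH2]. simpl. split.
    + destruct IH1 as [l1 Hl1]. destruct (Hw N) as [l2 Hl2].
      exists (l1 + l2). apply (is_series_plus _ _ _ _ Hl1 Hl2).
    + rewrite IH2. rewrite Series_plus; auto.
Qed.

Definition reexp_coef (a : nat -> R) (d : R) (n : nat) : R :=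
  PSeries (PS_derive_n n a) d / INR (fact n).

Definition reexp_term (a : nat -> R) (d : R) (n k : nat) : R := binom k n * a k * d ^ (k - n).

Lemma reexp_term_shift a d n j : reexp_term a d n (n + j) = PS_derive_n n a j * d ^ j / INR (fact n).
Proof.
  unfold reexp_term, PS_derive_n, binom. destruct (Nat.leb_spec n (n + j)); try lia.
  replace (n + j - n)%nat with j by lia. replace (j + n)%nat with (n + j)%nat by lia.
  unfold Binomial.C. replace (n + j - n)%nat with j by lia.
  field. split; apply INR_fact_neq_0.
Qed.

Lemma is_series_reexp_term a d n : Rbar_lt (Rabs d) (CV_radius a) ->
  is_series (reexp_term a d n) (reexp_coef a d n).
Proof.
  intros Hd.
  assert (Hex : ex_pseries (PS_derive_n n a) d) by (apply CV_radius_inside;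
    rewrite CV_radius_derive_n; auto).
  assert (H1 : is_series (fun j => PS_derive_n n a j * d ^ j / INR (fact n)) (reexp_coef a d n)).
  { unfold reexp_coef. apply is_series_scal_r. apply is_pseries_R. apply PSeries_correct. auto. }
  destruct n as [|n].
  - eapply is_series_ext; [|exact H1]. intros j.
    change (reexp_term a d 0 j) with (reexp_term a d 0 (0 + j)).
    rewrite reexp_term_shift. reflexivity.
  - apply (is_series_decr_n _ (S n)). lia.
    assert (E : sum_n (reexp_term a d (S n)) (Init.Nat.pred (S n)) = 0).
    { rewrite sum_n_rsum. simpl Init.Nat.pred. rewrite (rsum_ext _ (fun _ => 0)).
      apply rsum_const0. intros k Hk. unfold reexp_term. rewrite binom_gt by lia. ring. }
    match goal with |- is_series _ (plus _ (opp ?s)) => assert (E2 : s = 0) by exact E end.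
    rewrite E2. match goal with |- is_series _ ?l => replace l with (reexp_coef a d (S n)) end.
    2: { change (reexp_coef a d (S n) = reexp_coef a d (S n) + - 0). ring. }
    eapply is_series_ext; [|exact H1]. intros j. rewrite reexp_term_shift. reflexivity.
Qed.

Lemma Series_reexp_term a d n : Rbar_lt (Rabs d) (CV_radius a) -> ex_series (reexp_term a d n) /\
  Series (reexp_term a d n) = reexp_coef a d n.
Proof. intros H. pose proof (is_series_reexp_term a d n H). split. eexists; eauto.
  apply is_series_unique; auto. Qed.

Lemma Rabs_reexp_term a d n k : Rabs (reexp_term a d n k) =
  reexp_term (fun k => Rabs (a k)) (Rabs d) n k.
Proof. unfold reexp_term.
  rewrite !Rabs_mult, RPow_abs, (Rabs_pos_eq (binom k n)) by apply binom_ge0. auto. Qed.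

Lemma csum_cps_term_reexp_coef a d h N :
  csum (cps_term (reexp_coef a d) h) N =
  (csum (cps_term a (RtoC d + h)) N +
   csum (fun n => RtoC (reexp_coef a d n - rsum (reexp_term a d n) N) * h ^ n) N)%C.
Proof.
  rewrite (csum_ext (cps_term (reexp_coef a d) h)
    (fun n => (RtoC (rsum (reexp_term a d n) N) * h ^ n +
               RtoC (reexp_coef a d n - rsum (reexp_term a d n) N) * h ^ n)%C)).
  2: { intros n _. unfold cps_term. rewrite <- Cmult_plus_distr_r, <- RtoC_plus. do 2 f_equal. ring. }
  rewrite csum_plus. f_equal.
  rewrite (csum_ext _ (fun n => csum (fun k => RtoC (reexp_term a d n k) * h ^ n) N)%C).
  2: { intros n _. rewrite <- csum_RtoC, Cmult_comm, <- csum_scal. apply csum_ext. intros; ring. }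
  rewrite csum_exchange. apply csum_ext. intros k Hk.
  unfold cps_term. rewrite (Cpow_plus_binom (RtoC d) h k N Hk), <- csum_scal.
  apply csum_ext. intros n _. unfold reexp_term. rewrite !RtoC_mult, RtoC_pow. ring.
Qed.

Lemma rsum_reexp_tails_le a d h N :
  Rbar_lt (Rabs d + Cmod h) (CV_radius a) ->
  rsum (fun n => (Series (fun k => Rabs (reexp_term a d n k))
                  - rsum (fun k => Rabs (reexp_term a d n k)) N) * Cmod h ^ n) N
  <= Series (abs_term a (Rabs d + Cmod h)) - rsum (abs_term a (Rabs d + Cmod h)) N.
Proof.
  intros Hr. set (rho := Rabs d + Cmod h).
  assert (Hrho : 0 <= rho) by (unfold rho; pose proof (Rabs_pos d); pose proof (Cmod_ge_0 h); lra).
  assert (Hav : forall n, ex_series (fun k => Rabs (reexp_term a d n k))).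
  { intros n. eapply ex_series_ext. intros k; symmetry; apply Rabs_reexp_term.
    apply (Series_reexp_term (fun k => Rabs (a k)) (Rabs d) n).
    rewrite Rabs_Rabsolu, CV_radius_abs.
    eapply Rbar_le_lt_trans; [|exact Hr]. simpl. pose proof (Cmod_ge_0 h); lra. }
  set (w := fun n k => if (N <=? k)%nat then Rabs (reexp_term a d n k) * Cmod h ^ n else 0).
  assert (Hw : forall n, ex_series (w n) /\
    Series (w n) = (Series (fun k => Rabs (reexp_term a d n k))
                    - rsum (fun k => Rabs (reexp_term a d n k)) N) * Cmod h ^ n).
  { intros n. destruct (Series_tail (fun k => Rabs (reexp_term a d n k) * Cmod h ^ n) N) as [W1 W2].
    { eapply ex_series_ext. intros k. rewrite Rmult_comm. reflexivity.
      apply (@ex_series_scal_l R_AbsRing R_NormedModule (Cmod h ^ n) _ (Hav n)). }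
    split; [exact W1|]. unfold w. rewrite W2.
    rewrite (Series_ext _ (fun k => Cmod h ^ n * Rabs (reexp_term a d n k))) by (intros; ring).
    rewrite Series_scal_l,
      (rsum_ext _ (fun k => Cmod h ^ n * Rabs (reexp_term a d n k))) by (intros; ring).
    rewrite rsum_scal. ring. }
  rewrite (rsum_ext _ (fun n => Series (w n))) by (intros n _; symmetry; apply Hw).
  destruct (Series_rsum w N (fun n => proj1 (Hw n))) as [HS1 ->].
  destruct (Series_tail (abs_term a rho) N (ex_series_abs_term a rho Hrho Hr)) as [HI1 <-].
  apply Series_le; auto. intros k. split.
  { apply rsum_nonneg. intros n; unfold w; destruct (N <=? k)%nat;
      [apply Rmult_le_pos; [apply Rabs_pos| apply pow_le, Cmod_ge_0] | lra]. }
  unfold w. destruct (Nat.leb_spec N k).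
  - apply Rle_trans with (rsum (fun n => Rabs (reexp_term a d n k) * Cmod h ^ n) (S k)).
    { apply rsum_monotone; [|lia].
      intros; apply Rmult_le_pos; [apply Rabs_pos| apply pow_le, Cmod_ge_0]. }
    unfold abs_term, rho. rewrite (pow_plus_binom (Rabs d) (Cmod h) k (S k)), <- rsum_scal by lia.
    apply Req_le, rsum_ext. intros n _. rewrite Rabs_reexp_term. unfold reexp_term. ring.
  - rewrite rsum_const0. lra.
Qed.

Lemma csum_reexp_error_le a d h N : Rbar_lt (Rabs d + Cmod h) (CV_radius a) ->
  Cmod (csum (cps_term (reexp_coef a d) h) N - csum (cps_term a (RtoC d + h)) N)%C
  <= Series (abs_term a (Rabs d + Cmod h)) - rsum (abs_term a (Rabs d + Cmod h)) N.
Proof.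
  intros Hr. eapply Rle_trans; [|apply (rsum_reexp_tails_le a d h N Hr)].
  rewrite csum_cps_term_reexp_coef.
  replace (_ + _ - _)%C with
    (csum (fun n => RtoC (reexp_coef a d n - rsum (reexp_term a d n) N) * h ^ n) N)%C by ring.
  eapply Rle_trans; [apply Cmod_csum|]. apply rsum_le. intros n _.
  rewrite Cmod_mult, Cmod_R, Cmod_pow. apply Rmult_le_compat_r; [apply pow_le, Cmod_ge_0|].
  assert (Hd : Rbar_lt (Rabs d) (CV_radius a)).
  { eapply Rbar_le_lt_trans; [|exact Hr]. simpl. pose proof (Cmod_ge_0 h); lra. }
  destruct (Series_reexp_term a d n Hd) as [Hex <-].
  apply (Series_tail_le (reexp_term a d n) (fun k => Rabs (reexp_term a d n k)) N); [intros; lra|].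
  eapply ex_series_ext. intros k; symmetry; apply Rabs_reexp_term.
  apply (Series_reexp_term (fun k => Rabs (a k)) (Rabs d) n).
  rewrite Rabs_Rabsolu, CV_radius_abs. exact Hd.
Qed.

Lemma CPSeries_of_csum_cvg a z l :
  (forall eps : posreal, exists N0, forall N, (N0 <= N)%nat ->
     Cmod (csum (cps_term a z) N - l)%C < eps) ->
  CPSeries a z = l.
Proof.
  intros Lim.
  assert (HRe : is_series (fun k => Re (cps_term a z k)) (Re l)).
  { apply is_series_rsum. intros eps. destruct (Lim eps) as [N0 HN0]. exists N0. intros N HN.
    rewrite <- Re_csum, <- Re_minus. eapply Rle_lt_trans; [apply re_le_Cmod|auto]. }
  assert (HIm : is_series (fun k => Im (cps_term a z k)) (Im l)).
  { apply is_series_rsum. intros eps. destruct (Lim eps) as [N0 HN0]. exists N0. intros N HN.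
    rewrite <- Im_csum, <- Im_minus. eapply Rle_lt_trans; [apply Rabs_Im_le_Cmod|auto]. }
  unfold CPSeries. rewrite (is_series_unique _ _ HRe), (is_series_unique _ _ HIm).
  destruct l; reflexivity.
Qed.

Lemma CPSeries_reexpand a d h : Rbar_lt (Rabs d + Cmod h) (CV_radius a) ->
  CPSeries (reexp_coef a d) h = CPSeries a (RtoC d + h)%C.
Proof.
  intros Hr. set (rho := Rabs d + Cmod h).
  assert (Hrho : 0 <= rho) by (unfold rho; pose proof (Rabs_pos d); pose proof (Cmod_ge_0 h); lra).
  pose proof (ex_series_abs_term a rho Hrho Hr) as Ha.
  assert (Hz : Cmod (RtoC d + h)%C <= rho).
  { unfold rho. eapply Rle_trans. apply Cmod_triangle. rewrite Cmod_R. lra. }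
  apply CPSeries_of_csum_cvg. intros eps.
  destruct (Series_tail_small _ Ha (mkposreal (eps / 3) ltac:(pose proof (cond_pos eps); lra)))
    as [N0 HN0].
  exists N0. intros N HN. specialize (HN0 N HN). simpl in HN0.
  pose proof (csum_reexp_error_le a d h N Hr) as P1. fold rho in P1.
  pose proof (Cmod_CPSeries_sub_csum_le a (RtoC d + h)%C rho N Ha Hz) as P2.
  replace (csum (cps_term (reexp_coef a d) h) N - CPSeries a (RtoC d + h))%C with
    ((csum (cps_term (reexp_coef a d) h) N - csum (cps_term a (RtoC d + h)) N)
     - (CPSeries a (RtoC d + h) - csum (cps_term a (RtoC d + h)) N))%C by ring.
  eapply Rle_lt_trans. apply Cmod_triangle. rewrite Cmod_opp. lra.
Qed.

Lemma Re_CPSeries a z : Re (CPSeries a z) = Series (fun k => Re (cps_term a z k)).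
Proof. reflexivity. Qed.
Lemma Im_CPSeries a z : Im (CPSeries a z) = Series (fun k => Im (cps_term a z k)).
Proof. reflexivity. Qed.

Lemma CPSeries_RtoC a x : CPSeries a (RtoC x) = RtoC (PSeries a x).
Proof.
  apply C_ReIm_eq; rewrite ?Re_CPSeries, ?Im_CPSeries, ?re_RtoC, ?im_RtoC.
  - unfold PSeries. apply Series_ext. intros k. unfold cps_term. rewrite <- RtoC_pow, <- RtoC_mult.
    apply re_RtoC.
  - rewrite <- Series_zero. apply Series_ext. intros k. unfold cps_term.
    rewrite <- RtoC_pow, <- RtoC_mult. apply im_RtoC.
Qed.

Lemma Im_CPSeries_RtoC a x : Im (CPSeries a (RtoC x)) = 0.
Proof. rewrite CPSeries_RtoC. reflexivity. Qed.
Lemma Re_CPSeries_RtoC a x : Re (CPSeries a (RtoC x)) = PSeries a x.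
Proof. rewrite CPSeries_RtoC. reflexivity. Qed.

Lemma cps_term_conj a z k : cps_term a (Cconj z) k = Cconj (cps_term a z k).
Proof. unfold cps_term. rewrite Cmult_conj, Cpow_conj. f_equal.
  unfold Cconj, RtoC; simpl. f_equal; ring. Qed.

Lemma CPSeries_conj a z : CPSeries a (Cconj z) = Cconj (CPSeries a z).
Proof.
  apply C_ReIm_eq.
  - rewrite (re_conj (CPSeries a z)), (Re_CPSeries a (Cconj z)), (Re_CPSeries a z).
    apply Series_ext. intros k. rewrite cps_term_conj. apply re_conj.
  - rewrite (im_conj (CPSeries a z)), (Im_CPSeries a (Cconj z)), (Im_CPSeries a z).
    rewrite <- Series_opp. apply Series_ext. intros k. rewrite cps_term_conj. apply im_conj.
Qed.

Lemma CPSeries_0 a : CPSeries a (RtoC 0) = RtoC (a O).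
Proof. rewrite CPSeries_RtoC, PSeries_0. reflexivity. Qed.

(** * The holomorphic extension *)

Lemma is_derive_C_of_quad_rem (G : C -> C) (w0 l : C) (r K : R) :
  0 < r -> 0 <= K ->
  (forall w, Cmod (w - w0)%C < r -> Cmod (G w - G w0 - (w - w0) * l)%C <= K * Cmod (w - w0)%C ^ 2) ->
  @is_derive C_AbsRing C_NormedModule G w0 l.
Proof.
  intros Hr HK H. split.
  - apply is_linear_scal_l.
  - intros x Hx.
    apply (@is_filter_lim_locally_unique C_AbsRing (AbsRing_NormedModule C_AbsRing)) in Hx. subst x.
    intros eps.
    assert (He : 0 < Rmin r (eps / (K + 1))).
    { apply Rmin_pos; auto. apply Rdiv_lt_0_compat. apply cond_pos. lra. }
    exists (mkposreal _ He). intros y Hy.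
    change (Cmod (y - w0)%C < Rmin r (eps / (K + 1))) in Hy.
    assert (Hm1 : Cmod (y - w0)%C < r) by (eapply Rlt_le_trans; [exact Hy| apply Rmin_l]).
    assert (Hm2 : Cmod (y - w0)%C <= eps / (K + 1)) by (left; eapply Rlt_le_trans;
      [exact Hy| apply Rmin_r]).
    specialize (H y Hm1).
    change (Cmod (G y - G w0 - (y - w0) * l)%C <= eps * Cmod (y - w0)%C).
    eapply Rle_trans. exact H.
    pose proof (Cmod_ge_0 (y - w0)%C) as H0. pose proof (cond_pos eps).
    assert (K * Cmod (y - w0)%C <= eps).
    { apply Rle_trans with ((K + 1) * (eps / (K + 1))).
      apply Rmult_le_compat; lra. right. field. lra. }
    simpl pow. nra.
Qed.

(* The Taylor series of F at [Re w], evaluated at [i Im w]. Where F is the sum of a power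
   series, re-expanding that series about [Re w] identifies the two (taylor_ext_local). *)
Definition taylor_ext (F : R -> R) (w : C) : C :=
  CPSeries (fun n => Derive_n F n (Re w) / INR (fact n)) (0, Im w).

Lemma Cmod_pure_im (y : R) : Cmod (0, y) = Rabs y.
Proof. unfold Cmod; simpl. rewrite <- sqrt_Rsqr_abs. f_equal. unfold Rsqr. ring. Qed.

Lemma locally_R (p eps : R) (P : R -> Prop) : 0 < eps -> (forall y, Rabs (y - p) < eps -> P y) ->
  locally p P.
Proof. intros He H. exists (mkposreal eps He). intros y Hy. apply H. exact Hy. Qed.

Lemma taylor_ext_local F c a r : 0 < r -> Rbar_lt r (CV_radius a) ->
  (forall x, Rabs (x - c) < r -> F x = PSeries a (x - c)) ->
  forall w, Rabs (Re w - c) + Rabs (Im w) < r -> taylor_ext F w = CPSeries a (w - RtoC c)%C.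
Proof.
  intros Hr Hrad HF w Hw.
  assert (Hd : Rabs (Re w - c) < r) by (pose proof (Rabs_pos (Im w)); lra).
  assert (Hdr : Rbar_lt (Rabs (Re w - c)) (CV_radius a)) by (eapply Rbar_lt_trans; [|exact Hrad];
    simpl; lra).
  unfold taylor_ext. rewrite (CPSeries_ext _ (reexp_coef a (Re w - c))).
  2: { intros n. unfold reexp_coef. f_equal.
       rewrite (Derive_n_ext_loc F (fun x => PSeries a (x + - c))).
       - rewrite Derive_n_comp_trans. apply Derive_n_PSeries. auto.
       - apply (locally_R _ (r - Rabs (Re w - c))). lra. intros y Hy. apply HF.
         replace (y - c) with ((y - Re w) + (Re w - c)) by ring.
         eapply Rle_lt_trans. apply Rabs_triang. lra. }
  rewrite CPSeries_reexpand.
  - f_equal. destruct w as [x y]. apply C_ReIm_eq; simpl; ring.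
  - rewrite Cmod_pure_im. eapply Rbar_le_lt_trans; [|exact Hrad]. simpl. lra.
Qed.

Lemma taylor_ext_conj F w : taylor_ext F (Cconj w) = Cconj (taylor_ext F w).
Proof.
  unfold taylor_ext. rewrite re_conj, im_conj.
  replace (0, - Im w) with (Cconj (0, Im w)) by (unfold Cconj; simpl; f_equal).
  apply CPSeries_conj.
Qed.

Lemma taylor_ext_RtoC F t : taylor_ext F (RtoC t) = RtoC (F t).
Proof.
  unfold taylor_ext. rewrite re_RtoC, im_RtoC.
  change (0, 0) with (RtoC 0). rewrite CPSeries_0. simpl. f_equal. field.
Qed.

(** * Quadratic remainder bounds *)

Definition quad_rem_bound (S S' : C -> C) (R0 K : R) : Prop :=
  forall z h, Cmod z + Cmod h <= R0 -> Cmod (S (z + h) - S z - h * S' z)%C <= K * Cmod h ^ 2.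
Definition lip_bound (S : C -> C) (R0 L : R) : Prop :=
  forall z h, Cmod z + Cmod h <= R0 -> Cmod (S (z + h) - S z)%C <= L * Cmod h.

Lemma quad_rem_bound_mono S S' R0 K K' : quad_rem_bound S S' R0 K -> K <= K' ->
  quad_rem_bound S S' R0 K'.
Proof. intros H HK z h Hz. eapply Rle_trans. apply H; auto. apply Rmult_le_compat_r; auto.
  apply pow2_ge_0. Qed.
Lemma lip_bound_mono S R0 K K' : lip_bound S R0 K -> K <= K' -> lip_bound S R0 K'.
Proof. intros H HK z h Hz. eapply Rle_trans. apply H; auto. apply Rmult_le_compat_r; auto.
  apply Cmod_ge_0. Qed.

Lemma rem_const_ge0 a R0 : 0 <= R0 -> Rbar_lt R0 (CV_radius a) -> 0 <= rem_const a R0.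
Proof. intros H0 H. unfold rem_const. apply Rle_trans with (rsum (pow_rem_coef a R0) 0). simpl; lra.
  apply rsum_le_Series. intros; apply pow_rem_coef_ge0; auto. apply ex_series_pow_rem_coef; auto. Qed.

Lemma CPSeries_bounds a R0 : 0 <= R0 -> Rbar_lt R0 (CV_radius a) ->
  exists K, 0 <= K /\ quad_rem_bound (CPSeries a) (CPSeries (PS_derive a)) R0 K /\
    lip_bound (CPSeries a) R0 K.
Proof.
  intros H0 H.
  pose proof (rem_const_ge0 a R0 H0 H) as HK.
  assert (Ha' : Rbar_lt R0 (CV_radius (PS_derive a))) by (rewrite CV_radius_derive; auto).
  set (M := 2 * Series (abs_term (PS_derive a) R0)).
  assert (HM : 0 <= M).
  { unfold M. assert (0 <= Series (abs_term (PS_derive a) R0)).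
    { apply Rle_trans with (rsum (abs_term (PS_derive a) R0) 0). simpl; lra.
      apply rsum_le_Series.
        intros; unfold abs_term; apply Rmult_le_pos; [apply Rabs_pos|apply pow_le; auto].
      apply ex_series_abs_term; auto. } lra. }
  exists (rem_const a R0 + M + rem_const a R0 * R0). split. nra. split.
  - intros z h Hz. eapply Rle_trans. apply (CPSeries_taylor1_le a z h R0 H0 H Hz).
    apply Rmult_le_compat_r. apply pow2_ge_0. nra.
  - intros z h Hz. pose proof (CPSeries_taylor1_le a z h R0 H0 H Hz) as D.
    assert (Hz' : Cmod z <= R0) by (pose proof (Cmod_ge_0 h); lra).
    pose proof (Cmod_CPSeries_le (PS_derive a) z R0 (ex_series_abs_term _ _ H0 Ha') Hz') as B.
      fold M in B.
    replace (CPSeries a (z + h) - CPSeries a z)%C with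
      ((CPSeries a (z + h) - CPSeries a z - h * CPSeries (PS_derive a) z) + h
      * CPSeries (PS_derive a) z)%C by ring.
    eapply Rle_trans. apply Cmod_triangle. rewrite Cmod_mult.
    pose proof (Cmod_ge_0 h). assert (Cmod h <= R0) by (pose proof (Cmod_ge_0 z); lra).
    assert (rem_const a R0 * Cmod h ^ 2 <= rem_const a R0 * R0 * Cmod h).
    { replace (rem_const a R0 * Cmod h ^ 2) with ((rem_const a R0 * Cmod h) * Cmod h) by ring.
      replace (rem_const a R0 * R0 * Cmod h) with ((rem_const a R0 * Cmod h) * R0) by ring.
      apply Rmult_le_compat_l; auto. apply Rmult_le_pos; auto. }
    assert (Cmod h * Cmod (CPSeries (PS_derive a) z) <= M * Cmod h) by nra.
    nra.
Qed.

Definition pseries_bounds (a : nat -> R) (R0 K : R) : Prop :=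
  quad_rem_bound (CPSeries a) (CPSeries (PS_derive a)) R0 K /\
  quad_rem_bound (CPSeries (PS_derive a)) (CPSeries (PS_derive (PS_derive a))) R0 K /\
  lip_bound (CPSeries a) R0 K /\ lip_bound (CPSeries (PS_derive a)) R0 K /\
  lip_bound (CPSeries (PS_derive (PS_derive a))) R0 K.

Lemma CPSeries_bounds_upto2 a R0 : 0 <= R0 -> Rbar_lt R0 (CV_radius a) ->
  exists K, 0 <= K /\ pseries_bounds a R0 K.
Proof.
  intros H0 H.
  destruct (CPSeries_bounds a R0 H0 H) as [K0 [HK0 [Q0 L0]]].
  destruct (CPSeries_bounds (PS_derive a) R0 H0 ltac:(rewrite CV_radius_derive; auto)) as
    [K1 [HK1 [Q1 L1]]].
  destruct (CPSeries_bounds (PS_derive (PS_derive a)) R0 H0 ltac:(rewrite !CV_radius_derive; auto))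
    as [K2 [HK2 [_ L2]]].
  exists (K0 + K1 + K2). split; [lra|].
  repeat split; first [eapply quad_rem_bound_mono; [eassumption|lra] | eapply lip_bound_mono;
    [eassumption|lra]].
Qed.

(** * Partial derivatives from quadratic bounds *)

Definition square (x0 y0 r x y : R) : Prop := Rabs (x - x0) < r /\ Rabs (y - y0) < r.

Lemma is_derive_of_quad_rem (F : R -> R) x L r K : 0 < r ->
  (forall s, Rabs s < r -> Rabs (F (x + s) - F x - s * L) <= K * s ^ 2) -> is_derive F x L.
Proof.
  intros Hr H. apply is_derive_Reals. intros eps Heps.
  assert (HK : 0 <= K).
  { specialize (H (r/2) ltac:(rewrite Rabs_pos_eq; lra)).
    pose proof (Rabs_pos (F (x + r / 2) - F x - r / 2 * L)).
    assert (0 < (r/2)^2) by (apply pow_lt; lra). nra. }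
  assert (Hd : 0 < Rmin r (eps / (K + 1))) by (apply Rmin_pos; auto; apply Rdiv_lt_0_compat; lra).
  exists (mkposreal _ Hd). intros h Hh0 Hh. simpl in Hh.
  assert (Hh1 : Rabs h < r) by (eapply Rlt_le_trans; [exact Hh| apply Rmin_l]).
  assert (Hh2 : Rabs h < eps / (K + 1)) by (eapply Rlt_le_trans; [exact Hh| apply Rmin_r]).
  specialize (H h Hh1).
  replace ((F (x + h) - F x) / h - L) with ((F (x + h) - F x - h * L) / h) by (field; auto).
  unfold Rdiv. rewrite Rabs_mult, Rabs_inv.
  assert (Hpos : 0 < Rabs h) by (apply Rabs_pos_lt; auto).
  apply Rle_lt_trans with (K * h ^ 2 * / Rabs h).
  { apply Rmult_le_compat_r. left; apply Rinv_0_lt_compat; auto. auto. }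
  replace (K * h ^ 2 * / Rabs h) with (K * Rabs h).
  2: { rewrite <- (pow2_abs h). field. lra. }
  apply Rle_lt_trans with (K * (eps / (K + 1))). apply Rmult_le_compat_l; lra.
  apply Rlt_le_trans with ((K + 1) * (eps / (K + 1))). apply Rmult_lt_compat_r.
    apply Rdiv_lt_0_compat; lra. lra.
  right. field. lra.
Qed.

Definition quad_partials (G Gx Gy : R -> R -> R) (x0 y0 r K : R) : Prop :=
  forall x y s, square x0 y0 r x y -> Rabs s < r ->
    Rabs (G (x + s) y - G x y - s * Gx x y) <= K * s ^ 2 /\
    Rabs (G x (y + s) - G x y - s * Gy x y) <= K * s ^ 2.

Definition lip_at (G : R -> R -> R) (x0 y0 r K : R) : Prop :=
  forall x y, square x0 y0 r x y -> Rabs (G x y - G x0 y0) <= K * (Rabs (x - x0) + Rabs (y - y0)).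

Lemma cont2_of_lip_at G H x0 y0 r K : 0 < r -> (forall x y, square x0 y0 r x y -> G x y = H x y) ->
  lip_at H x0 y0 r K -> cont2 G x0 y0.
Proof.
  intros Hr HE HL. unfold cont2. apply filterlim_locally. intros eps.
  set (K1 := Rabs K).
  assert (HK1 : 0 <= K1) by apply Rabs_pos.
  assert (Hd : 0 < Rmin r (eps / (2 * (K1 + 1)))).
  { apply Rmin_pos; auto. apply Rdiv_lt_0_compat. apply cond_pos. lra. }
  exists (mkposreal _ Hd). intros [u v] [Hu Hv]. simpl in Hu, Hv.
  change (Rabs (u - x0) < Rmin r (eps / (2 * (K1 + 1)))) in Hu.
  change (Rabs (v - y0) < Rmin r (eps / (2 * (K1 + 1)))) in Hv.
  simpl. change (Rabs (G u v - G x0 y0) < eps).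
  assert (Bu : square x0 y0 r u v).
  { split; (eapply Rlt_le_trans; [eassumption| apply Rmin_l]). }
  assert (B0 : square x0 y0 r x0 y0) by (split; rewrite Rminus_eq_0, Rabs_R0; lra).
  rewrite (HE u v Bu), (HE x0 y0 B0).
  eapply Rle_lt_trans. apply (HL u v Bu).
  assert (Rabs (u - x0) < eps / (2 * (K1 + 1))) by (eapply Rlt_le_trans; [eassumption| apply Rmin_r]).
  assert (Rabs (v - y0) < eps / (2 * (K1 + 1))) by (eapply Rlt_le_trans; [eassumption| apply Rmin_r]).
  pose proof (cond_pos eps).
  pose proof (Rabs_pos (u - x0)). pose proof (Rabs_pos (v - y0)).
  apply Rle_lt_trans with ((K1 + 1) * (Rabs (u - x0) + Rabs (v - y0))).
  { apply Rle_trans with (K1 * (Rabs (u - x0) + Rabs (v - y0))).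
    { apply Rmult_le_compat_r. lra. apply Rle_abs. } nra. }
  apply Rlt_le_trans with ((K1 + 1) * (eps / (2 * (K1 + 1)) + eps / (2 * (K1 + 1)))).
  { apply Rmult_lt_compat_l; lra. }
  right. field. lra.
Qed.

Definition C1at (g : R -> R -> R) (x y : R) : Prop :=
  ex_derive (fun t => g t y) x /\ ex_derive (fun t => g x t) y /\
  cont2 g x y /\ cont2 (dx g) x y /\ cont2 (dy g) x y.

Lemma square_mono x0 y0 r r' x y : square x0 y0 r x y -> r <= r' -> square x0 y0 r' x y.
Proof. unfold square. intros [H1 H2] H. split; lra. Qed.

Lemma square_center x0 y0 r : 0 < r -> square x0 y0 r x0 y0.
Proof. intros H. unfold square. rewrite !Rminus_eq_0, Rabs_R0. lra. Qed.

Lemma is_derive_of_quad_partials G H Hx Hy x0 y0 r K : 0 < r ->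
  (forall x y, square x0 y0 (2 * r) x y -> G x y = H x y) -> quad_partials H Hx Hy x0 y0 r K ->
  forall x y, square x0 y0 r x y ->
    is_derive (fun t => G t y) x (Hx x y) /\ is_derive (fun t => G x t) y (Hy x y).
Proof.
  intros Hr HE HQ x y Hb.
  assert (HB2 : square x0 y0 (2 * r) x y) by (apply (square_mono _ _ r); auto; lra).
  destruct Hb as [Hbx Hby].
  split.
  - apply (is_derive_of_quad_rem _ x _ r K Hr). intros s Hs.
    rewrite (HE (x + s) y), (HE x y); auto.
    + apply (HQ x y s); [split|]; auto.
    + split; [|lra]. replace (x + s - x0) with ((x - x0) + s) by ring.
      eapply Rle_lt_trans. apply Rabs_triang. lra.
  - apply (is_derive_of_quad_rem _ y _ r K Hr). intros s Hs.
    rewrite (HE x (y + s)), (HE x y); auto.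
    + apply (HQ x y s); [split|]; auto.
    + split; [lra|]. replace (y + s - y0) with ((y - y0) + s) by ring.
      eapply Rle_lt_trans. apply Rabs_triang. lra.
Qed.

Definition sub2 (G1 G2 : R -> R -> R) (x y : R) : R := G1 x y - G2 x y.

Lemma Rabs_minus_le a b : Rabs (a - b) <= Rabs a + Rabs b.
Proof. unfold Rminus. eapply Rle_trans. apply Rabs_triang. rewrite Rabs_Ropp. lra. Qed.

Lemma quad_partials_minus G1 G1x G1y G2 G2x G2y x0 y0 r K1 K2 :
  quad_partials G1 G1x G1y x0 y0 r K1 -> quad_partials G2 G2x G2y x0 y0 r K2 ->
  quad_partials (sub2 G1 G2) (sub2 G1x G2x) (sub2 G1y G2y) x0 y0 r (K1 + K2).
Proof.
  intros H1 H2 x y s Hb Hs. unfold sub2. destruct (H1 x y s Hb Hs) as [A1 B1].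
    destruct (H2 x y s Hb Hs) as [A2 B2].
  split.
  - replace (G1 (x + s) y - G2 (x + s) y - (G1 x y - G2 x y) - s * (G1x x y - G2x x y)) with
      ((G1 (x + s) y - G1 x y - s * G1x x y) - (G2 (x + s) y - G2 x y - s * G2x x y)) by ring.
    eapply Rle_trans. apply Rabs_minus_le. lra.
  - replace (G1 x (y + s) - G2 x (y + s) - (G1 x y - G2 x y) - s * (G1y x y - G2y x y)) with
      ((G1 x (y + s) - G1 x y - s * G1y x y) - (G2 x (y + s) - G2 x y - s * G2y x y)) by ring.
    eapply Rle_trans. apply Rabs_minus_le. lra.
Qed.

Lemma lip_at_minus G1 G2 x0 y0 r K1 K2 : lip_at G1 x0 y0 r K1 -> lip_at G2 x0 y0 r K2 ->
  lip_at (sub2 G1 G2) x0 y0 r (K1 + K2).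
Proof.
  intros H1 H2 x y Hb. unfold sub2. specialize (H1 x y Hb). specialize (H2 x y Hb).
  replace (G1 x y - G2 x y - (G1 x0 y0 - G2 x0 y0)) with
    ((G1 x y - G1 x0 y0) - (G2 x y - G2 x0 y0)) by ring.
  eapply Rle_trans. apply Rabs_minus_le. lra.
Qed.

Lemma quad_partials_mono G Gx Gy x0 y0 r r' K K' : quad_partials G Gx Gy x0 y0 r K ->
  0 < r' <= r -> K <= K' ->
  quad_partials G Gx Gy x0 y0 r' K'.
Proof.
  intros H Hr HK x y s Hb Hs. destruct (H x y s) as [A B].
  apply (square_mono _ _ r'); auto; lra. lra.
  assert (0 <= s ^ 2) by apply pow2_ge_0. split; eapply Rle_trans; eauto; apply Rmult_le_compat_r; auto.
Qed.

Lemma lip_at_mono G x0 y0 r r' K K' : lip_at G x0 y0 r K -> 0 < r' <= r -> K <= K' ->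
  lip_at G x0 y0 r' K'.
Proof.
  intros H Hr HK x y Hb. eapply Rle_trans. apply H. apply (square_mono _ _ r'); auto; lra.
  apply Rmult_le_compat_r; auto. pose proof (Rabs_pos (x - x0)); pose proof (Rabs_pos (y - y0)); lra.
Qed.

Definition C2_data (G Gx Gy Gxx Gxy Gyx Gyy : R -> R -> R) (x0 y0 r K : R) : Prop :=
  quad_partials G Gx Gy x0 y0 (2 * r) K /\
  quad_partials Gx Gxx Gxy x0 y0 r K /\ quad_partials Gy Gyx Gyy x0 y0 r K /\
  lip_at G x0 y0 r K /\ lip_at Gx x0 y0 r K /\ lip_at Gy x0 y0 r K /\
  lip_at Gxx x0 y0 r K /\ lip_at Gxy x0 y0 r K /\ lip_at Gyx x0 y0 r K /\ lip_at Gyy x0 y0 r K.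

Lemma C2_data_sub G1 G1x G1y G1xx G1xy G1yx G1yy G2 G2x G2y G2xx G2xy G2yx G2yy x0 y0 r K1 K2 :
  C2_data G1 G1x G1y G1xx G1xy G1yx G1yy x0 y0 r K1 ->
  C2_data G2 G2x G2y G2xx G2xy G2yx G2yy x0 y0 r K2 ->
  C2_data (sub2 G1 G2) (sub2 G1x G2x) (sub2 G1y G2y)
    (sub2 G1xx G2xx) (sub2 G1xy G2xy) (sub2 G1yx G2yx) (sub2 G1yy G2yy) x0 y0 r (K1 + K2).
Proof.
  intros [Q0 [Q1 [Q2 [L0 [L1 [L2 [L3 [L4 [L5 L6]]]]]]]]]
    [P0 [P1 [P2 [M0 [M1 [M2 [M3 [M4 [M5 M6]]]]]]]]].
  refine (conj _ (conj _ (conj _ (conj _ (conj _ (conj _ (conj _ (conj _ (conj _ _)))))))));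
    first [apply quad_partials_minus | apply lip_at_minus]; assumption.
Qed.

Lemma C2_at_of_bounds (U G Gx Gy Gxx Gxy Gyx Gyy : R -> R -> R) x0 y0 r K : 0 < r ->
  (forall x y, square x0 y0 (4 * r) x y -> U x y = G x y) ->
  C2_data G Gx Gy Gxx Gxy Gyx Gyy x0 y0 r K ->
  C1at U x0 y0 /\ C1at (dx U) x0 y0 /\ C1at (dy U) x0 y0 /\
  dx (dx U) x0 y0 = Gxx x0 y0 /\ dy (dy U) x0 y0 = Gyy x0 y0.
Proof.
  intros Hr HE [Q0 [Q1 [Q2 [L0 [L1 [L2 [L3 [L4 [L5 L6]]]]]]]]].
  assert (S1 : forall x y, square x0 y0 (2 * r) x y ->
     is_derive (fun t => U t y) x (Gx x y) /\ is_derive (fun t => U x t) y (Gy x y)).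
  { apply (is_derive_of_quad_partials U G Gx Gy x0 y0 (2 * r) K). lra.
    intros x y Hb; apply HE. replace (2 * (2 * r)) with (4 * r) in Hb by ring. auto. auto. }
  assert (E1 : forall x y, square x0 y0 (2 * r) x y -> dx U x y = Gx x y /\ dy U x y = Gy x y).
  { intros x y Hb. destruct (S1 x y Hb). split; unfold dx, dy; apply is_derive_unique; auto. }
  assert (S2 : forall x y, square x0 y0 r x y ->
     is_derive (fun t => dx U t y) x (Gxx x y) /\ is_derive (fun t => dx U x t) y (Gxy x y)).
  { apply (is_derive_of_quad_partials (dx U) Gx Gxx Gxy x0 y0 r K); auto. intros; apply E1; auto. }
  assert (S3 : forall x y, square x0 y0 r x y ->
     is_derive (fun t => dy U t y) x (Gyx x y) /\ is_derive (fun t => dy U x t) y (Gyy x y)).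
  { apply (is_derive_of_quad_partials (dy U) Gy Gyx Gyy x0 y0 r K); auto. intros; apply E1; auto. }
  assert (E2 : forall x y, square x0 y0 r x y ->
     dx (dx U) x y = Gxx x y /\ dy (dx U) x y = Gxy x y /\ dx (dy U) x y = Gyx x y /\
       dy (dy U) x y = Gyy x y).
  { intros x y Hb. destruct (S2 x y Hb), (S3 x y Hb).
    repeat split; apply is_derive_unique; auto. }
  assert (Bc : square x0 y0 r x0 y0) by (apply square_center; auto).
  assert (Bc2 : square x0 y0 (2 * r) x0 y0) by (apply square_center; lra).
  assert (Er : forall x y, square x0 y0 r x y -> square x0 y0 (2 * r) x y)
    by (intros; eapply square_mono; eauto; lra).
  assert (Er4 : forall x y, square x0 y0 r x y -> square x0 y0 (4 * r) x y)
    by (intros; eapply square_mono; eauto; lra).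
  assert (CU : cont2 U x0 y0) by exact
    (cont2_of_lip_at _ G x0 y0 r K Hr (fun x y Hb => HE x y (Er4 x y Hb)) L0).
  assert (CX : cont2 (dx U) x0 y0)
    by exact (cont2_of_lip_at _ Gx x0 y0 r K Hr (fun x y Hb => proj1 (E1 x y (Er x y Hb))) L1).
  assert (CY : cont2 (dy U) x0 y0)
    by exact (cont2_of_lip_at _ Gy x0 y0 r K Hr (fun x y Hb => proj2 (E1 x y (Er x y Hb))) L2).
  assert (CXX : cont2 (dx (dx U)) x0 y0)
    by exact (cont2_of_lip_at _ Gxx x0 y0 r K Hr (fun x y Hb => proj1 (E2 x y Hb)) L3).
  assert (CXY : cont2 (dy (dx U)) x0 y0)
    by exact (cont2_of_lip_at _ Gxy x0 y0 r K Hr (fun x y Hb => proj1 (proj2 (E2 x y Hb))) L4).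
  assert (CYX : cont2 (dx (dy U)) x0 y0)
    by exact (cont2_of_lip_at _ Gyx x0 y0 r K Hr (fun x y Hb => proj1 (proj2 (proj2 (E2 x y Hb)))) L5).
  assert (CYY : cont2 (dy (dy U)) x0 y0)
    by exact (cont2_of_lip_at _ Gyy x0 y0 r K Hr (fun x y Hb => proj2 (proj2 (proj2 (E2 x y Hb)))) L6).
  destruct (S1 _ _ Bc2) as [D1x D1y]. destruct (S2 _ _ Bc) as [D2x D2y].
    destruct (S3 _ _ Bc) as [D3x D3y].
  destruct (E2 _ _ Bc) as [-> [_ [_ ->]]].
  split; [|split; [|split; [|split]]]; try reflexivity; repeat split; auto; eexists; eauto.
Qed.

Definition C1_data (G Gx Gy : R -> R -> R) (x0 y0 r K : R) : Prop :=
  quad_partials G Gx Gy x0 y0 r K /\ lip_at G x0 y0 r K /\ lip_at Gx x0 y0 r K /\ lip_at Gy x0 y0 r K.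

Lemma C1_data_mono G Gx Gy x0 y0 r K K' : C1_data G Gx Gy x0 y0 r K -> K <= K' ->
  C1_data G Gx Gy x0 y0 r K'.
Proof.
  intros [Q [L0 [L1 L2]]] HK. assert (0 < r \/ r <= 0) as [Hr|Hr] by lra.
  - split; [eapply quad_partials_mono; eauto; lra|].
    repeat split; eapply lip_at_mono; eauto; lra.
  - assert (Hno : forall x y, ~ square x0 y0 r x y).
    { intros x y [Hx _]. pose proof (Rabs_pos (x - x0)). lra. }
    split; [|split; [|split]]; intros x y; [intros s Hb|intros Hb..]; exfalso; exact (Hno x y Hb).
Qed.

Lemma C1_data_of_C2_data G Gx Gy Gxx Gxy Gyx Gyy x0 y0 r K : 0 < r ->
  C2_data G Gx Gy Gxx Gxy Gyx Gyy x0 y0 r K -> C1_data G Gx Gy x0 y0 r K.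
Proof.
  intros Hr [Q0 [_ [_ [L0 [L1 [L2 _]]]]]].
  split; [eapply quad_partials_mono; [exact Q0| lra| lra] | auto].
Qed.

Definition glue_axis (Gu Gl : R -> R -> R) (x y : R) : R := if Rlt_dec 0 y then Gu x y else Gl x y.

Lemma is_derive_across_axis (U Gu Gux Guy Gl Glx Gly : R -> R -> R) x0 rb K : 0 < rb ->
  (forall x y, square x0 0 (2 * rb) x y -> 0 < y -> U x y = Gu x y) ->
  (forall x y, square x0 0 (2 * rb) x y -> y <= 0 -> U x y = Gl x y) ->
  quad_partials Gu Gux Guy x0 0 rb K -> quad_partials Gl Glx Gly x0 0 rb K ->
  (forall x, Rabs (x - x0) < rb -> Gu x 0 = Gl x 0) ->
  (forall x, Rabs (x - x0) < rb -> Guy x 0 = Gly x 0) ->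
  forall x y, square x0 0 rb x y ->
    is_derive (fun t => U t y) x (glue_axis Gux Glx x y) /\
    is_derive (fun t => U x t) y (glue_axis Guy Gly x y).
Proof.
  intros Hrb EQu EQl Qu Ql M0 My x y Hb. pose proof Hb as [Hbx Hby]. unfold glue_axis.
  assert (B2 : forall s, Rabs s < rb -> square x0 0 (2 * rb) (x + s) y).
  { intros s Hs. split; [|lra]. replace (x + s - x0) with ((x - x0) + s) by ring.
    eapply Rle_lt_trans. apply Rabs_triang. lra. }
  assert (B3 : forall s, Rabs s < rb -> square x0 0 (2 * rb) x (y + s)).
  { intros s Hs. split; [lra|]. replace (y + s - 0) with ((y - 0) + s) by ring.
    eapply Rle_lt_trans. apply Rabs_triang. lra. }
  assert (B0 : square x0 0 (2 * rb) x y) by (eapply square_mono; eauto; lra).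
  destruct (Rlt_dec 0 y) as [Hy|Hy].
  - split.
    + apply (is_derive_of_quad_rem _ x _ rb K Hrb). intros s Hs.
      rewrite EQu, (EQu x y); auto. apply (Qu x y s Hb Hs).
    + assert (Hm : 0 < Rmin rb y) by (apply Rmin_pos; lra).
      apply (is_derive_of_quad_rem _ y _ (Rmin rb y) K Hm). intros s Hs.
      assert (Hs1 : Rabs s < rb) by (eapply Rlt_le_trans; [exact Hs| apply Rmin_l]).
      assert (Hs2 : Rabs s < y) by (eapply Rlt_le_trans; [exact Hs| apply Rmin_r]).
      rewrite EQu, (EQu x y); auto. apply (Qu x y s Hb Hs1).
      apply Rabs_def2 in Hs2. lra.
  - destruct (Req_dec y 0) as [Hy0|Hy0].
    + subst y. split.
      * apply (is_derive_of_quad_rem _ x _ rb K Hrb). intros s Hs.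
        rewrite EQl, (EQl x 0); auto; try lra. apply (Ql x 0 s Hb Hs).
      * apply (is_derive_of_quad_rem _ 0 _ rb K Hrb). intros s Hs.
        rewrite (EQl x 0) by (auto; lra).
        destruct (Rlt_dec 0 s) as [Hs0|Hs0].
        -- rewrite (EQu x (0 + s)); auto; [|lra]. rewrite <- (M0 x Hbx), <- (My x Hbx).
           apply (Qu x 0 s Hb Hs).
        -- rewrite (EQl x (0 + s)); auto; [|lra]. apply (Ql x 0 s Hb Hs).
    + assert (Hyn : y < 0) by lra. split.
      * apply (is_derive_of_quad_rem _ x _ rb K Hrb). intros s Hs.
        rewrite EQl, (EQl x y); auto; try lra. apply (Ql x y s Hb Hs).
      * assert (Hm : 0 < Rmin rb (- y)) by (apply Rmin_pos; lra).
        apply (is_derive_of_quad_rem _ y _ (Rmin rb (-y)) K Hm). intros s Hs.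
        assert (Hs1 : Rabs s < rb) by (eapply Rlt_le_trans; [exact Hs| apply Rmin_l]).
        assert (Hs2 : Rabs s < - y) by (eapply Rlt_le_trans; [exact Hs| apply Rmin_r]).
        rewrite EQl, (EQl x y); auto; try lra. apply (Ql x y s Hb Hs1).
        apply Rabs_def2 in Hs2. lra.
Qed.

Lemma C1at_across_axis (U Gu Gux Guy Gl Glx Gly : R -> R -> R) x0 rb K : 0 < rb ->
  (forall x y, square x0 0 (2 * rb) x y -> 0 < y -> U x y = Gu x y) ->
  (forall x y, square x0 0 (2 * rb) x y -> y <= 0 -> U x y = Gl x y) ->
  C1_data Gu Gux Guy x0 0 rb K -> C1_data Gl Glx Gly x0 0 rb K ->
  (forall x, Rabs (x - x0) < rb -> Gu x 0 = Gl x 0) ->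
  (forall x, Rabs (x - x0) < rb -> Guy x 0 = Gly x 0) ->
  Gux x0 0 = Glx x0 0 ->
  C1at U x0 0.
Proof.
  intros Hrb EQu EQl [Qu [LGu [LGux LGuy]]] [Ql [LGl [LGlx LGly]]] M0 My Mx.
  set (Dx := glue_axis Gux Glx). set (Dy := glue_axis Guy Gly).
  pose proof (is_derive_across_axis U Gu Gux Guy Gl Glx Gly x0 rb K Hrb EQu EQl Qu Ql M0 My) as Hder.
  assert (Bc : square x0 0 rb x0 0) by (apply square_center; auto).
  assert (Edx : forall x y, square x0 0 rb x y ->
    dx U x y = Dx x y) by (intros; apply is_derive_unique; apply Hder; auto).
  assert (Edy : forall x y, square x0 0 rb x y ->
    dy U x y = Dy x y) by (intros; apply is_derive_unique; apply Hder; auto).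
  assert (HU0 : U x0 0 = Gl x0 0).
  { apply EQl; [eapply square_mono; eauto; lra | lra]. }
  split. eexists; apply (Hder _ _ Bc). split. eexists; apply (Hder _ _ Bc). split.
  - apply (cont2_of_lip_at U U x0 0 rb K); auto. intros x y Hb. rewrite HU0.
    assert (Hb2 : square x0 0 (2 * rb) x y) by (eapply square_mono; eauto; lra).
    destruct (Rlt_dec 0 y) as [Hy|Hy].
    + rewrite (EQu x y Hb2 Hy). rewrite <- M0 by (rewrite Rminus_eq_0, Rabs_R0; auto). apply LGu; auto.
    + rewrite (EQl x y Hb2 ltac:(lra)). apply LGl; auto.
  - split.
    + apply (cont2_of_lip_at _ Dx x0 0 rb K); auto. intros x y Hb. unfold Dx, glue_axis.
      destruct (Rlt_dec 0 0) as [h|h]; [lra|].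
      destruct (Rlt_dec 0 y); [rewrite <- Mx; apply LGux; auto | apply LGlx; auto].
    + apply (cont2_of_lip_at _ Dy x0 0 rb K); auto. intros x y Hb. unfold Dy, glue_axis.
      destruct (Rlt_dec 0 0) as [h|h]; [lra|].
      destruct (Rlt_dec 0 y); [|apply LGly; auto].
      rewrite <- My by (rewrite Rminus_eq_0, Rabs_R0; auto). apply LGuy; auto.
Qed.

Definition affC (z0 ax ay : C) (x y : R) : C := (z0 + RtoC x * ax + RtoC y * ay)%C.
(* The building block of U: its partial derivatives are again of this form, with [mu]
   multiplied by [ax] or [ay] and [S] replaced by its derivative. *)
Definition re_comp (mu : C) (S : C ->
  C) (z0 ax ay : C) (x y : R) : R := Re (mu * S (affC z0 ax ay x y))%C.

Lemma affC_shift z0 ax ay x0 y0 x y :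
  affC z0 ax ay x y = (affC z0 ax ay x0 y0 + RtoC (x - x0) * ax + RtoC (y - y0) * ay)%C.
Proof. unfold affC. rewrite !RtoC_minus. ring. Qed.

Lemma Cmod_affC_le z0 ax ay x0 y0 x y :
  Cmod (affC z0 ax ay x y) <= Cmod (affC z0 ax ay x0 y0) + Rabs (x - x0) * Cmod ax
    + Rabs (y - y0) * Cmod ay.
Proof.
  rewrite (affC_shift z0 ax ay x0 y0). eapply Rle_trans. apply Cmod_triangle.
  eapply Rle_trans. apply Rplus_le_compat_r. apply Cmod_triangle.
  rewrite !Cmod_mult, !Cmod_R. lra.
Qed.

Lemma Cmod_affC_sub_le z0 ax ay x0 y0 x y :
  Cmod (affC z0 ax ay x y - affC z0 ax ay x0 y0)%C <= Rabs (x - x0) * Cmod ax + Rabs (y - y0) * Cmod ay.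
Proof.
  rewrite (affC_shift z0 ax ay x0 y0 x y).
  replace (affC z0 ax ay x0 y0 + RtoC (x - x0) * ax + RtoC (y - y0) * ay - affC z0 ax ay x0 y0)%C
    with (RtoC (x - x0) * ax + RtoC (y - y0) * ay)%C by ring.
  eapply Rle_trans. apply Cmod_triangle. rewrite !Cmod_mult, !Cmod_R. lra.
Qed.

Lemma Re_mult_lin (mu X Y Z : C) (s : R) :
  Re (mu * X)%C - Re (mu * Y)%C - s * Re (mu * Z)%C = Re (mu * (X - Y - RtoC s * Z))%C.
Proof. destruct mu, X, Y, Z. simpl. ring. Qed.

Lemma Re_mult_sub (mu X Y : C) : Re (mu * X)%C - Re (mu * Y)%C = Re (mu * (X - Y))%C.
Proof. destruct mu, X, Y. simpl. ring. Qed.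

Lemma Re_mult_quad_rem_le mu S S' p v s R0 K : quad_rem_bound S S' R0 K ->
  Cmod p + Rabs s * Cmod v <= R0 ->
  Rabs (Re (mu * S (p + RtoC s * v))%C - Re (mu * S p)%C - s * Re (mu * v * S' p)%C)
  <= Cmod mu * K * Cmod v ^ 2 * s ^ 2.
Proof.
  intros HQ Hp.
  replace (mu * v * S' p)%C with (mu * (v * S' p))%C by ring. rewrite Re_mult_lin.
  replace (S (p + RtoC s * v) - S p - RtoC s * (v * S' p))%C
    with (S (p + RtoC s * v) - S p - (RtoC s * v) * S' p)%C by ring.
  eapply Rle_trans; [apply re_le_Cmod|]. rewrite Cmod_mult.
  eapply Rle_trans;
    [apply Rmult_le_compat_l; [apply Cmod_ge_0| apply HQ; rewrite Cmod_mult, Cmod_R; lra]|].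
  rewrite Cmod_mult, Cmod_R, <- (pow2_abs s). right; ring.
Qed.

Lemma re_comp_quad_partials mu S S' z0 ax ay x0 y0 r K R0 : 0 <= K -> quad_rem_bound S S' R0 K ->
  Cmod (affC z0 ax ay x0 y0) + 2 * r * (Cmod ax + Cmod ay) <= R0 ->
  quad_partials (re_comp mu S z0 ax ay) (re_comp (mu * ax) S' z0 ax ay) (re_comp (mu * ay) S' z0 ax ay)
    x0 y0 r (Cmod mu * K * (Cmod ax + Cmod ay) ^ 2).
Proof.
  intros HK HQ HA x y s [Hx Hy] Hs.
  pose proof (Cmod_affC_le z0 ax ay x0 y0 x y) as HC.
  pose proof (Cmod_ge_0 ax). pose proof (Cmod_ge_0 ay). pose proof (Cmod_ge_0 mu).
  assert (Hxr : Rabs (x - x0) * Cmod ax <= r * Cmod ax) by (apply Rmult_le_compat_r; lra).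
  assert (Hyr : Rabs (y - y0) * Cmod ay <= r * Cmod ay) by (apply Rmult_le_compat_r; lra).
  assert (Hsr : forall v, Cmod v <= Cmod ax + Cmod ay -> Rabs s * Cmod v <= r * (Cmod ax + Cmod ay)).
  { intros v Hv. pose proof (Rabs_pos s). apply Rmult_le_compat; auto using Cmod_ge_0. lra. }
  assert (Hk : forall v, Cmod v <= Cmod ax + Cmod ay ->
             Cmod mu * K * Cmod v ^ 2 * s ^ 2 <= Cmod mu * K * (Cmod ax + Cmod ay) ^ 2 * s ^ 2).
  { intros v Hv. apply Rmult_le_compat_r; [apply pow2_ge_0|].
    apply Rmult_le_compat_l; [apply Rmult_le_pos; auto|]. pose proof (Cmod_ge_0 v). nra. }
  unfold re_comp. split.
  - replace (affC z0 ax ay (x + s) y) with (affC z0 ax ay x y + RtoC s * ax)%C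
      by (unfold affC; rewrite RtoC_plus; ring).
    eapply Rle_trans; [apply (Re_mult_quad_rem_le _ _ _ _ _ _ R0 K HQ)| apply Hk; lra].
    pose proof (Hsr ax ltac:(lra)). lra.
  - replace (affC z0 ax ay x (y + s)) with (affC z0 ax ay x y + RtoC s * ay)%C
      by (unfold affC; rewrite RtoC_plus; ring).
    eapply Rle_trans; [apply (Re_mult_quad_rem_le _ _ _ _ _ _ R0 K HQ)| apply Hk; lra].
    pose proof (Hsr ay ltac:(lra)). lra.
Qed.

Lemma re_comp_lip_at mu S z0 ax ay x0 y0 r L R0 :
  0 < r -> 0 <= L ->
  (forall z h, Cmod z + Cmod h <= R0 -> Cmod (S (z + h) - S z)%C <= L * Cmod h) ->
  Cmod (affC z0 ax ay x0 y0) + r * (Cmod ax + Cmod ay) <= R0 ->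
  lip_at (re_comp mu S z0 ax ay) x0 y0 r (Cmod mu * L * (Cmod ax + Cmod ay)).
Proof.
  intros Hr HL HS HA x y [Hx Hy].
  pose proof (Cmod_affC_sub_le z0 ax ay x0 y0 x y) as HC.
  pose proof (Cmod_ge_0 ax). pose proof (Cmod_ge_0 ay). pose proof (Cmod_ge_0 mu).
  pose proof (Rabs_pos (x - x0)). pose proof (Rabs_pos (y - y0)).
  unfold re_comp. rewrite Re_mult_sub.
  eapply Rle_trans. apply re_le_Cmod. rewrite Cmod_mult.
  set (A0 := affC z0 ax ay x0 y0) in *. set (A := affC z0 ax ay x y) in *.
  replace A with (A0 + (A - A0))%C by ring.
  assert (Hxr : Rabs (x - x0) * Cmod ax <= r * Cmod ax) by (apply Rmult_le_compat_r; lra).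
  assert (Hyr : Rabs (y - y0) * Cmod ay <= r * Cmod ay) by (apply Rmult_le_compat_r; lra).
  eapply Rle_trans. apply Rmult_le_compat_l. auto. apply HS. lra.
  replace (A0 + (A - A0) - A0)%C with (A - A0)%C by ring.
  assert (Cmod (A - A0)%C <= (Cmod ax + Cmod ay) * (Rabs (x - x0) + Rabs (y - y0))).
  { eapply Rle_trans. exact HC. nra. }
  replace (Cmod mu * L * (Cmod ax + Cmod ay) * (Rabs (x - x0) + Rabs (y - y0))) with
    (Cmod mu * L * ((Cmod ax + Cmod ay) * (Rabs (x - x0) + Rabs (y - y0)))) by ring.
  rewrite <- Rmult_assoc. apply Rmult_le_compat_l. apply Rmult_le_pos; auto. auto.
Qed.

Lemma Cmod_mult_le_l (m b : C) : Cmod b <= 1 -> Cmod (m * b)%C <= Cmod m.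
Proof. intros Hb. rewrite Cmod_mult. pose proof (Cmod_ge_0 m). nra. Qed.

Lemma C2_data_re_comp mu a z0 ax ay x0 y0 r K R0 : 0 < r -> 0 <= K -> pseries_bounds a R0 K ->
  Cmod ax + Cmod ay <= 1 -> Cmod (affC z0 ax ay x0 y0) + 4 * r <= R0 ->
  C2_data (re_comp mu (CPSeries a) z0 ax ay)
    (re_comp (mu * ax) (CPSeries (PS_derive a)) z0 ax ay)
    (re_comp (mu * ay) (CPSeries (PS_derive a)) z0 ax ay)
    (re_comp (mu * ax * ax) (CPSeries (PS_derive (PS_derive a))) z0 ax ay)
    (re_comp (mu * ax * ay) (CPSeries (PS_derive (PS_derive a))) z0 ax ay)
    (re_comp (mu * ay * ax) (CPSeries (PS_derive (PS_derive a))) z0 ax ay)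
    (re_comp (mu * ay * ay) (CPSeries (PS_derive (PS_derive a))) z0 ax ay)
    x0 y0 r (Cmod mu * K).
Proof.
  intros Hr HK [Q0 [Q1 [L0 [L1 L2]]]] Hs HA.
  pose proof (Cmod_ge_0 ax). pose proof (Cmod_ge_0 ay). pose proof (Cmod_ge_0 mu).
  assert (Hax : Cmod ax <= 1) by lra. assert (Hay : Cmod ay <= 1) by lra.
  assert (Kq : forall m, Cmod m <= Cmod mu -> Cmod m * K * (Cmod ax + Cmod ay) ^ 2 <= Cmod mu * K).
  { intros m Hm. pose proof (Cmod_ge_0 m). assert ((Cmod ax + Cmod ay) ^ 2 <= 1) by nra.
    assert (0 <= Cmod m * K) by nra. nra. }
  assert (Kl : forall m, Cmod m <= Cmod mu -> Cmod m * K * (Cmod ax + Cmod ay) <= Cmod mu * K).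
  { intros m Hm. pose proof (Cmod_ge_0 m). assert (0 <= Cmod m * K) by nra. nra. }
  assert (Hm1 : Cmod (mu * ax) <= Cmod mu) by (apply Cmod_mult_le_l; lra).
  assert (Hm2 : Cmod (mu * ay) <= Cmod mu) by (apply Cmod_mult_le_l; lra).
  assert (Hm11 : Cmod (mu * ax * ax) <= Cmod mu) by (eapply Rle_trans; [apply Cmod_mult_le_l|]; lra).
  assert (Hm12 : Cmod (mu * ax * ay) <= Cmod mu) by (eapply Rle_trans; [apply Cmod_mult_le_l|]; lra).
  assert (Hm21 : Cmod (mu * ay * ax) <= Cmod mu) by (eapply Rle_trans; [apply Cmod_mult_le_l|]; lra).
  assert (Hm22 : Cmod (mu * ay * ay) <= Cmod mu) by (eapply Rle_trans; [apply Cmod_mult_le_l|]; lra).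
  assert (HA2 : Cmod (affC z0 ax ay x0 y0) + 2 * (2 * r) * (Cmod ax + Cmod ay) <= R0) by nra.
  assert (HA1 : Cmod (affC z0 ax ay x0 y0) + 2 * r * (Cmod ax + Cmod ay) <= R0) by nra.
  assert (HA0 : Cmod (affC z0 ax ay x0 y0) + r * (Cmod ax + Cmod ay) <= R0) by nra.
  refine (conj _ (conj _ (conj _ (conj _ (conj _ (conj _ (conj _ (conj _ (conj _ _))))))))).
  - eapply quad_partials_mono;
    [apply (re_comp_quad_partials _ _ _ _ _ _ _ _ (2 * r) K R0); auto| lra| apply Kq; lra].
  - eapply quad_partials_mono;
    [apply (re_comp_quad_partials _ _ _ _ _ _ _ _ r K R0); auto| lra| apply Kq; lra].
  - eapply quad_partials_mono;
    [apply (re_comp_quad_partials _ _ _ _ _ _ _ _ r K R0); auto| lra| apply Kq; lra].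
  - eapply lip_at_mono; [apply (re_comp_lip_at _ _ _ _ _ _ _ r K R0); auto| lra| apply Kl; lra].
  - eapply lip_at_mono; [apply (re_comp_lip_at _ _ _ _ _ _ _ r K R0); auto| lra| apply Kl; lra].
  - eapply lip_at_mono; [apply (re_comp_lip_at _ _ _ _ _ _ _ r K R0); auto| lra| apply Kl; lra].
  - eapply lip_at_mono; [apply (re_comp_lip_at _ _ _ _ _ _ _ r K R0); auto| lra| apply Kl; lra].
  - eapply lip_at_mono; [apply (re_comp_lip_at _ _ _ _ _ _ _ r K R0); auto| lra| apply Kl; lra].
  - eapply lip_at_mono; [apply (re_comp_lip_at _ _ _ _ _ _ _ r K R0); auto| lra| apply Kl; lra].
  - eapply lip_at_mono; [apply (re_comp_lip_at _ _ _ _ _ _ _ r K R0); auto| lra| apply Kl; lra].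
Qed.

(** * Local power series along [-1, 0] *)

Definition local_pseries (f : R -> R) (c : R) (a : nat -> R) (r : R) : Prop :=
  0 < r /\ Rbar_lt r (CV_radius a) /\ forall x, Rabs (x - c) < r -> f x = PSeries a (x - c).

Lemma local_pseries_of_analytic_at f c : analytic_at f c -> exists a r, local_pseries f c a r.
Proof.
  intros [a [r0 [Hr0 H]]]. exists a, (r0 / 2). split; [lra|split].
  - assert (Hb : Rbar_le (3 * r0 / 4) (CV_radius a)).
    { destruct (CV_radius_bounded a) as [Hub _]. apply Hub.
      specialize (H (c + 3 * r0 / 4) ltac:(replace (c + 3 * r0 / 4 - c) with (3 * r0 / 4) by ring;
        rewrite Rabs_pos_eq; lra)).
      replace (c + 3 * r0 / 4 - c) with (3 * r0 / 4) in H by ring.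
      apply is_pseries_R in H.
      assert (Hl : is_lim_seq (fun n => a n * (3 * r0 / 4) ^ n) 0) by (apply ex_series_lim_0;
        eexists; eauto).
      destruct (filterlim_bounded (fun n => a n * (3 * r0 / 4) ^ n)) as [M HM].
      { exists 0. exact Hl. }
      exists M. intros n. apply HM. }
    eapply Rbar_lt_le_trans; [|exact Hb]. simpl. lra.
  - intros x Hx. symmetry. apply is_pseries_unique. apply H. lra.
Qed.

Lemma taylor_ext_local_pseries f c a r : local_pseries f c a r ->
  forall w, Rabs (Re w - c) + Rabs (Im w) < r -> taylor_ext f w = CPSeries a (w - RtoC c)%C.
Proof. intros [H1 [H2 H3]]. apply taylor_ext_local; auto. Qed.

Lemma local_pseries_real f c a r : local_pseries f c a r -> forall t, Rabs (t - c) < r ->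
  f t = Re (CPSeries a (RtoC (t - c))).
Proof. intros [H1 [H2 H3]] t Ht. rewrite Re_CPSeries_RtoC. auto. Qed.

Lemma Re_taylor1_RtoC (S S' : C -> C) (t s : R) :
  Re (S (RtoC (t + s))) - Re (S (RtoC t)) - s * Re (S' (RtoC t)) =
  Re (S (RtoC t + RtoC s) - S (RtoC t) - RtoC s * S' (RtoC t))%C.
Proof. rewrite RtoC_plus. rewrite !Re_minus, re_scal_l. ring. Qed.

Lemma is_derive_local_pseries f c a r : local_pseries f c a r -> forall t, Rabs (t - c) < r ->
  is_derive f t (Re (CPSeries (PS_derive a) (RtoC (t - c)))).
Proof.
  intros HL t Ht. destruct HL as [H1 [H2 H3]].
  destruct (CPSeries_bounds a r ltac:(lra) H2) as [K [HK [Q _]]].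
  apply (is_derive_of_quad_rem _ t _ (r - Rabs (t - c)) K). lra.
  intros s Hs.
  rewrite (local_pseries_real f c a r (conj H1 (conj H2 H3)) (t + s)).
  2: { replace (t + s - c) with ((t - c) + s) by ring. eapply Rle_lt_trans. apply Rabs_triang. lra. }
  rewrite (local_pseries_real f c a r (conj H1 (conj H2 H3)) t Ht).
  replace (t + s - c) with ((t - c) + s) by ring.
  rewrite (Re_taylor1_RtoC (CPSeries a) (CPSeries (PS_derive a)) (t - c) s).
  eapply Rle_trans. apply re_le_Cmod. rewrite <- (pow2_abs s), <- (Cmod_R s).
  apply Q. rewrite !Cmod_R. lra.
Qed.

Lemma Derive_local_pseries f c a r : local_pseries f c a r -> forall t, Rabs (t - c) < r ->
  Derive f t = Re (CPSeries (PS_derive a) (RtoC (t - c))).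
Proof. intros. apply is_derive_unique. apply (is_derive_local_pseries f c a r); auto. Qed.

(* Every point of [-1, 0] lies well inside the disc of some local power series of f, with
   a uniform margin [delta]; such a [delta] exists by compactness. *)
Definition uniform_pseries_radius (f : R -> R) (delta : R) : Prop :=
  0 < delta /\ forall t, -1 <= t <= 0 ->
    exists c a r, local_pseries f c a r /\ Rabs (t - c) < r / 4 /\ 8 * delta <= r.

Lemma uniform_local_pseries f : analytic_near_m10 f -> exists delta, uniform_pseries_radius f delta.
Proof.
  intros [eps [Heps Han]].
  assert (Hex : forall c, exists r, 0 < r /\ (-1 <= c <= 0 -> exists a, local_pseries f c a r)).
  { intros c. destruct (Rle_dec (-1) c) as [h1|h1]; [destruct (Rle_dec c 0) as [h2|h2]|].
    - destruct (local_pseries_of_analytic_at f c (Han c ltac:(lra))) as [a [r Hr]].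
      exists r. split. apply Hr. intros _. exists a. auto.
    - exists 1. split. lra. intros; lra.
    - exists 1. split. lra. intros; lra. }
  set (rad := fun c => proj1_sig (constructive_indefinite_description _ (Hex c))).
  assert (Hrad : forall c, 0 < rad c /\ (-1 <= c <= 0 -> exists a, local_pseries f c a (rad c))).
  { intros c. unfold rad. destruct (constructive_indefinite_description _ (Hex c)). simpl. auto. }
  set (fam := mkfamily (fun c => -1 <= c <= 0) (fun c x => (-1 <= c <= 0) /\ Rabs (x - c) < rad c / 4)
                (fun c H => match H with ex_intro _ H0 => proj1 H0 end)).
  assert (Hcov : covering_open_set (fun c => -1 <= c <= 0) fam).
  { split.
    - intros x Hx. exists x. simpl. split; auto. rewrite Rminus_eq_0, Rabs_R0.
      pose proof (proj1 (Hrad x)). lra.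
    - intros c x [Hc Hx]. simpl in Hc, Hx.
      assert (He : 0 < rad c / 4 - Rabs (x - c)) by lra.
      exists (mkposreal _ He). intros y Hy. unfold disc in Hy. simpl in Hy. simpl. split; auto.
      replace (y - c) with ((y - x) + (x - c)) by ring. eapply Rle_lt_trans. apply Rabs_triang. lra. }
  destruct (compact_P3 (-1) 0 fam Hcov) as [D [HcovD [l Hl]]].
  set (delta := fold_right (fun y m => Rmin (rad y / 8) m) 1 l).
  assert (Hdpos : 0 < delta).
  { unfold delta. clear Hl. induction l; simpl. lra. apply Rmin_pos; auto.
    pose proof (proj1 (Hrad a)). lra. }
  assert (Hdle : forall y, In y l -> delta <= rad y / 8).
  { unfold delta. clear Hl Hdpos delta. induction l; simpl; intros y Hy. contradiction.
    destruct Hy as [<-|Hy]. apply Rmin_l. eapply Rle_trans. apply Rmin_r. auto. }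
  exists delta. split; auto. intros t Ht.
  destruct (HcovD t Ht) as [y [[Hy1 Hy2] HDy]]. simpl in Hy1, Hy2.
  assert (Hin : In y l) by (apply Hl; simpl; split; auto).
  destruct (proj2 (Hrad y) Hy1) as [a Ha].
  exists y, a, (rad y). split; auto. split; auto. specialize (Hdle y Hin). lra.
Qed.

Definition half_pt (x y : R) : C := Cmult (Cminus (x, y) (RtoC 1)) (RtoC (/ 2)).

(* The paper's U: the d'Alembert solution below the axis and [i (g w - g (conj w))] above
   it, with [w = (z - 1) / 2] and [g = taylor_ext f]. *)
Definition Usol (f : R -> R) (x y : R) : R :=
  if Rle_dec y 0 then f ((x - y - 1) / 2) - f ((x + y - 1) / 2)
  else Re (Cmult Ci (Cminus (taylor_ext f (half_pt x y)) (taylor_ext f (half_pt x (- y))))).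

Lemma Re_half_pt x y : Re (half_pt x y) = (x - 1) / 2.
Proof. unfold half_pt. simpl. field. Qed.
Lemma Im_half_pt x y : Im (half_pt x y) = y / 2.
Proof. unfold half_pt. simpl. field. Qed.
Lemma half_pt_opp x y : half_pt x (- y) = Cconj (half_pt x y).
Proof. apply C_ReIm_eq; rewrite ?re_conj, ?im_conj, ?Re_half_pt, ?Im_half_pt, ?Im_half_pt;
  auto. field. Qed.

Lemma Usol_upper f x y : 0 < y -> Usol f x y = Re ((2 * Ci) * taylor_ext f (half_pt x y))%C.
Proof.
  intros Hy. unfold Usol. destruct (Rle_dec y 0); [lra|].
  rewrite half_pt_opp, taylor_ext_conj. destruct (taylor_ext f (half_pt x y)) as [p q]. simpl. ring.
Qed.

Lemma Usol_lower f x y : y <= 0 -> Usol f x y = f ((x - y - 1) / 2) - f ((x + y - 1) / 2).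
Proof. intros Hy. unfold Usol. destruct (Rle_dec y 0); [auto|lra]. Qed.

Lemma Cmod_half : Cmod (RtoC (1/2)) = 1/2.
Proof. rewrite Cmod_R. rewrite Rabs_pos_eq; lra. Qed.
Lemma Cmod_ihalf : Cmod (0, 1/2) = 1/2.
Proof. rewrite Cmod_pure_im. rewrite Rabs_pos_eq; lra. Qed.
Lemma Cmod_mhalf : Cmod (RtoC (-1/2)) = 1/2.
Proof. rewrite Cmod_R. rewrite Rabs_left; lra. Qed.

Lemma Re_mult_plus_l (m1 m2 X : C) : Re (m1 * X)%C + Re (m2 * X)%C = Re ((m1 + m2) * X)%C.
Proof. destruct m1, m2, X; simpl; ring. Qed.

Lemma Rabs_half_sub u u0 : Rabs ((u - 1) / 2 - ((u0 - 1) / 2)) = Rabs (u - u0) / 2.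
Proof. replace ((u - 1) / 2 - (u0 - 1) / 2) with ((u - u0) * / 2) by field.
  rewrite Rabs_mult, Rabs_inv, (Rabs_pos_eq 2) by lra. field. Qed.

Lemma Usol_harmonic_at f c a r x0 y0 rb : local_pseries f c a r -> 0 < rb -> 4 * rb < y0 ->
  Rabs ((x0 - 1) / 2 - c) + y0 / 2 + 8 * rb < r ->
  C1at (Usol f) x0 y0 /\ C1at (dx (Usol f)) x0 y0 /\ C1at (dy (Usol f)) x0 y0 /\
  dx (dx (Usol f)) x0 y0 + dy (dy (Usol f)) x0 y0 = 0.
Proof.
  intros Hps Hrb Hy0 Hc. pose proof Hps as [Hr [Hrad _]].
  destruct (CPSeries_bounds_upto2 a r ltac:(lra) Hrad) as [K [HK Hb]].
  set (z0 := RtoC (-1/2 - c)). set (ax := RtoC (1/2)). set (ay := (0, 1/2) : C). set (mu := (2 * Ci)%C).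
  assert (Hs : Cmod ax + Cmod ay = 1) by (unfold ax, ay; rewrite Cmod_half, Cmod_ihalf; lra).
  assert (HAff : forall x y, affC z0 ax ay x y = (half_pt x y - RtoC c)%C).
  { intros x y. apply C_ReIm_eq; unfold affC, z0, ax, ay;
      rewrite ?Re_minus, ?Im_minus, ?Re_half_pt, ?Im_half_pt; simpl; field. }
  assert (HA0 : Cmod (affC z0 ax ay x0 y0) <= Rabs ((x0 - 1) / 2 - c) + y0 / 2).
  { rewrite HAff. eapply Rle_trans; [apply Cmod_le_Re_Im|].
    rewrite Re_minus, Im_minus, Re_half_pt, Im_half_pt. simpl.
    rewrite Rminus_0_r, (Rabs_pos_eq (y0 / 2)) by lra. lra. }
  assert (EQ : forall x y, square x0 y0 (4 * rb) x y ->
    Usol f x y = re_comp mu (CPSeries a) z0 ax ay x y).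
  { intros x y [Hx Hy]. apply Rabs_def2 in Hy.
    rewrite Usol_upper by lra. unfold re_comp. rewrite HAff. do 2 f_equal.
    apply (taylor_ext_local_pseries f c a r Hps).
      rewrite Re_half_pt, Im_half_pt, (Rabs_pos_eq (y / 2)) by lra.
    replace ((x - 1) / 2 - c) with (((x - 1) / 2 - (x0 - 1) / 2) + ((x0 - 1) / 2 - c)) by ring.
    pose proof (Rabs_triang ((x - 1) / 2 - (x0 - 1) / 2) ((x0 - 1) / 2 - c)).
    rewrite Rabs_half_sub in H. lra. }
  destruct (C2_at_of_bounds (Usol f) _ _ _ _ _ _ _ x0 y0 rb _ Hrb EQ
    (C2_data_re_comp mu a z0 ax ay x0 y0 rb K r Hrb HK Hb ltac:(lra) ltac:(lra)))
    as [C0 [C1 [C2 [-> ->]]]].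
  split; [exact C0|split; [exact C1|split; [exact C2|]]].
  unfold re_comp. rewrite Re_mult_plus_l.
  replace (mu * ax * ax + mu * ay * ay)%C with (RtoC 0)
    by (unfold mu, ax, ay; apply C_ReIm_eq; simpl; field).
  rewrite Cmult_0_l. reflexivity.
Qed.

Lemma Cmod_real z : Im z = 0 -> Cmod z = Rabs (Re z).
Proof. destruct z as [p q]. simpl. intros ->. apply Cmod_R. Qed.

Lemma re_comp_real_chart f c a r z0 ax ay x y : local_pseries f c a r ->
  z0 = RtoC (-1/2 - c) -> ax = RtoC (1/2) -> (ay = RtoC (-1/2) \/ ay = RtoC (1/2)) ->
  Rabs (Re (affC z0 ax ay x y)) < r ->
  re_comp 1 (CPSeries a) z0 ax ay x y = f (Re (affC z0 ax ay x y) + c).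
Proof.
  intros Hps Hz Hax Hay Hb. rewrite (local_pseries_real f c a r Hps).
  - unfold re_comp. rewrite Cmult_1_l. f_equal. f_equal. apply C_ReIm_eq.
    + simpl. ring.
    + rewrite im_RtoC. subst. destruct Hay; subst; simpl; ring.
  - replace (Re (affC z0 ax ay x y) + c - c) with (Re (affC z0 ax ay x y)) by ring. auto.
Qed.

Lemma Rabs_half_shift_lt x y x0 y0 s e d : Rabs s <= 1 -> Rabs (x - x0) < e -> Rabs (y - y0) < e ->
  Rabs (((x - x0) + s * (y - y0)) / 2 + d) < e + Rabs d.
Proof.
  intros Hs Hx Hy. eapply Rle_lt_trans; [apply Rabs_triang|].
  rewrite Rabs_div, (Rabs_pos_eq 2) by lra.
  pose proof (Rabs_triang (x - x0) (s * (y - y0))). rewrite Rabs_mult in H.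
  pose proof (Rabs_pos s). pose proof (Rabs_pos (y - y0)).
  assert (Rabs s * Rabs (y - y0) <= Rabs (y - y0)) by nra. lra.
Qed.

Lemma Usol_wave_at f c1 a1 r1 c2 a2 r2 x0 y0 rb :
  local_pseries f c1 a1 r1 -> local_pseries f c2 a2 r2 -> 0 < rb -> 4 * rb < - y0 ->
  Rabs ((x0 - y0 - 1) / 2 - c1) + 8 * rb < r1 -> Rabs ((x0 + y0 - 1) / 2 - c2) + 8 * rb < r2 ->
  C1at (Usol f) x0 y0 /\ C1at (dx (Usol f)) x0 y0 /\ C1at (dy (Usol f)) x0 y0 /\
  dx (dx (Usol f)) x0 y0 - dy (dy (Usol f)) x0 y0 = 0.
Proof.
  intros HL1 HL2 Hrb Hy0 Hc1 Hc2. pose proof HL1 as [Hr1 [Hrad1 _]]. pose proof HL2 as [Hr2 [Hrad2 _]].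
  destruct (CPSeries_bounds_upto2 a1 r1 ltac:(lra) Hrad1) as [K1 [HK1 Hb1]].
  destruct (CPSeries_bounds_upto2 a2 r2 ltac:(lra) Hrad2) as [K2 [HK2 Hb2]].
  set (z1 := RtoC (-1/2 - c1)). set (z2 := RtoC (-1/2 - c2)).
  set (ax := RtoC (1/2)). set (ay1 := RtoC (-1/2)). set (ay2 := RtoC (1/2)).
  assert (Hs1 : Cmod ax + Cmod ay1 = 1) by (unfold ax, ay1; rewrite Cmod_half, Cmod_mhalf; lra).
  assert (Hs2 : Cmod ax + Cmod ay2 = 1) by (unfold ax, ay2; rewrite Cmod_half; lra).
  assert (Re1 : forall x y, Re (affC z1 ax ay1 x y) = (x - y - 1) / 2 - c1)
    by (intros; unfold affC, z1, ax, ay1; simpl; field).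
  assert (Re2 : forall x y, Re (affC z2 ax ay2 x y) = (x + y - 1) / 2 - c2)
    by (intros; unfold affC, z2, ax, ay2; simpl; field).
  assert (Ca1 : Cmod (affC z1 ax ay1 x0 y0) = Rabs ((x0 - y0 - 1) / 2 - c1)).
  { rewrite <- (Re1 x0 y0). apply Cmod_real. unfold affC, z1, ax, ay1; simpl; field. }
  assert (Ca2 : Cmod (affC z2 ax ay2 x0 y0) = Rabs ((x0 + y0 - 1) / 2 - c2)).
  { rewrite <- (Re2 x0 y0). apply Cmod_real. unfold affC, z2, ax, ay2; simpl; field. }
  assert (EQ : forall x y, square x0 y0 (4 * rb) x y ->
     Usol f x y = sub2 (re_comp 1 (CPSeries a1) z1 ax ay1) (re_comp 1 (CPSeries a2) z2 ax ay2) x y).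
  { intros x y [Hx Hy]. apply Rabs_def2 in Hx. apply Rabs_def2 in Hy.
    rewrite Usol_lower by lra. unfold sub2.
    rewrite (re_comp_real_chart f c1 a1 r1 z1 ax ay1 x y HL1),
      (re_comp_real_chart f c2 a2 r2 z2 ax ay2 x y HL2);
      auto; rewrite ?Re1, ?Re2.
    - f_equal; f_equal; ring.
    - replace ((x + y - 1) / 2 - c2) with
      (((x - x0) + 1 * (y - y0)) / 2 + ((x0 + y0 - 1) / 2 - c2)) by field.
      eapply Rlt_trans;
        [apply Rabs_half_shift_lt with (e := 4 * rb); try apply Rabs_def1; rewrite ?Rabs_R1; lra| lra].
    - replace ((x - y - 1) / 2 - c1) with
      (((x - x0) + -1 * (y - y0)) / 2 + ((x0 - y0 - 1) / 2 - c1)) by field.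
      eapply Rlt_trans;
        [apply Rabs_half_shift_lt with (e := 4 * rb); try apply Rabs_def1; rewrite ?Rabs_m1;
        lra| lra]. }
  destruct (C2_at_of_bounds (Usol f) _ _ _ _ _ _ _ x0 y0 rb _ Hrb EQ
    (C2_data_sub _ _ _ _ _ _ _ _ _ _ _ _ _ _ x0 y0 rb _ _
      (C2_data_re_comp 1 a1 z1 ax ay1 x0 y0 rb K1 r1 Hrb HK1 Hb1 ltac:(lra) ltac:(lra))
      (C2_data_re_comp 1 a2 z2 ax ay2 x0 y0 rb K2 r2 Hrb HK2 Hb2 ltac:(lra) ltac:(lra))))
    as [C0 [C1 [C2 [-> ->]]]].
  split; [exact C0|split; [exact C1|split; [exact C2|]]]. unfold sub2.
  replace (1 * ay1 * ay1)%C with (1 * ax * ax)%C by (unfold ax, ay1; apply C_ReIm_eq; simpl; field).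
  replace (1 * ay2 * ay2)%C with (1 * ax * ax)%C by (unfold ax, ay2; apply C_ReIm_eq; simpl; field).
  ring.
Qed.

Lemma affC_axis z0 ax ay ay' x : affC z0 ax ay x 0 = affC z0 ax ay' x 0.
Proof. unfold affC. rewrite !Cmult_0_l. reflexivity. Qed.

Lemma affC_real c x : affC (RtoC (-1/2 - c)) (RtoC (1/2)) (0, 1/2) x 0 = RtoC ((x - 1) / 2 - c).
Proof. apply C_ReIm_eq; unfold affC; simpl; field. Qed.

Lemma axis_square_bounds c r x0 rb x y : Rabs ((x0 - 1) / 2 - c) + 4 * rb < r ->
  square x0 0 (2 * rb) x y ->
  Rabs ((x - y - 1) / 2 - c) < r /\ Rabs ((x + y - 1) / 2 - c) < r /\
  Rabs ((x - 1) / 2 - c) + Rabs (y / 2) < r.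
Proof.
  intros Hc [Hx Hy]. pose proof (Rabs_pos (x - x0)) as Hpos. split; [|split].
  - replace ((x - y - 1) / 2 - c) with (((x - x0) + -1 * (y - 0)) / 2 + ((x0 - 1) / 2 - c)) by field.
    eapply Rlt_trans; [apply Rabs_half_shift_lt with (e := 2 * rb); rewrite ?Rabs_m1; auto; lra| lra].
  - replace ((x + y - 1) / 2 - c) with (((x - x0) + 1 * (y - 0)) / 2 + ((x0 - 1) / 2 - c)) by field.
    eapply Rlt_trans; [apply Rabs_half_shift_lt with (e := 2 * rb); rewrite ?Rabs_R1; auto; lra| lra].
  - rewrite Rminus_0_r in Hy. rewrite Rabs_div, (Rabs_pos_eq 2) by lra.
    replace ((x - 1) / 2 - c) with ((x - x0) / 2 + ((x0 - 1) / 2 - c)) by field.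
    pose proof (Rabs_triang ((x - x0) / 2) ((x0 - 1) / 2 - c)).
    rewrite Rabs_div, (Rabs_pos_eq 2) in H by lra. lra.
Qed.

Lemma Usol_C1at_axis f c a r x0 rb : local_pseries f c a r -> 0 < rb ->
  Rabs ((x0 - 1) / 2 - c) + 4 * rb < r -> C1at (Usol f) x0 0.
Proof.
  intros Hps Hrb Hc. pose proof Hps as [Hr [Hrad _]].
  destruct (CPSeries_bounds_upto2 a r ltac:(lra) Hrad) as [K [HK Hb]].
  set (z0 := RtoC (-1/2 - c)). set (ax := RtoC (1/2)). set (ayu := (0, 1/2) : C).
  set (ay1 := RtoC (-1/2)). set (ay2 := RtoC (1/2)). set (mu := (2 * Ci)%C).
  assert (Cax : Cmod ax = 1/2) by (unfold ax; apply Cmod_half).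
  assert (Cayu : Cmod ayu = 1/2) by (unfold ayu; apply Cmod_ihalf).
  assert (Cay1 : Cmod ay1 = 1/2) by (unfold ay1; apply Cmod_mhalf).
  assert (Cay2 : Cmod ay2 = 1/2) by (unfold ay2; apply Cmod_half).
  assert (HA0 : forall ay, Cmod (affC z0 ax ay x0 0) = Rabs ((x0 - 1) / 2 - c)).
  { intros ay. rewrite (affC_axis _ _ _ ayu). unfold z0, ax, ayu. rewrite affC_real. apply Cmod_R. }
  assert (HAu : forall x y, affC z0 ax ayu x y = (half_pt x y - RtoC c)%C).
  { intros x y. apply C_ReIm_eq; unfold affC, z0, ax, ayu;
      rewrite ?Re_minus, ?Im_minus, ?Re_half_pt, ?Im_half_pt; simpl; field. }
  assert (Re1 : forall x y, Re (affC z0 ax ay1 x y) = (x - y - 1) / 2 - c)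
    by (intros; unfold affC, z0, ax, ay1; simpl; field).
  assert (Re2 : forall x y, Re (affC z0 ax ay2 x y) = (x + y - 1) / 2 - c)
    by (intros; unfold affC, z0, ax, ay2; simpl; field).
  assert (Hsq := fun x y => axis_square_bounds c r x0 rb x y Hc).
  set (S' := CPSeries (PS_derive a)).
  apply (C1at_across_axis (Usol f) (re_comp mu (CPSeries a) z0 ax ayu)
     (re_comp (mu * ax) S' z0 ax ayu) (re_comp (mu * ayu) S' z0 ax ayu)
     (sub2 (re_comp 1 (CPSeries a) z0 ax ay1) (re_comp 1 (CPSeries a) z0 ax ay2))
     (sub2 (re_comp (1 * ax) S' z0 ax ay1) (re_comp (1 * ax) S' z0 ax ay2))
     (sub2 (re_comp (1 * ay1) S' z0 ax ay1) (re_comp (1 * ay2) S' z0 ax ay2))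
     x0 rb (Cmod mu * K + (Cmod 1 * K + Cmod 1 * K)) Hrb).
  - intros x y Hsq2 Hy. rewrite Usol_upper by auto. unfold re_comp. rewrite HAu. do 2 f_equal.
    apply (taylor_ext_local_pseries f c a r Hps). rewrite Re_half_pt, Im_half_pt. apply Hsq; auto.
  - intros x y Hsq2 Hy. rewrite Usol_lower by auto. unfold sub2. destruct (Hsq x y Hsq2) as [B1 [B2 _]].
    rewrite (re_comp_real_chart f c a r z0 ax ay1 x y Hps),
      (re_comp_real_chart f c a r z0 ax ay2 x y Hps);
      auto; rewrite ?Re1, ?Re2; auto.
    f_equal; f_equal; ring.
  - eapply C1_data_mono.
    + eapply C1_data_of_C2_data; [exact Hrb|].
      apply (C2_data_re_comp mu a z0 ax ayu x0 0 rb K r Hrb HK Hb); [lra| rewrite HA0; lra].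
    + pose proof (Cmod_ge_0 mu). rewrite Cmod_1. lra.
  - eapply C1_data_mono.
    + eapply C1_data_of_C2_data; [exact Hrb|]. apply C2_data_sub.
      * apply (C2_data_re_comp 1 a z0 ax ay1 x0 0 rb K r Hrb HK Hb); [lra| rewrite HA0; lra].
      * apply (C2_data_re_comp 1 a z0 ax ay2 x0 0 rb K r Hrb HK Hb); [lra| rewrite HA0; lra].
    + pose proof (Cmod_ge_0 mu). rewrite Cmod_1. nra.
  - intros x Hx. unfold sub2, re_comp. rewrite (affC_axis z0 ax ay1 ayu), (affC_axis z0 ax ay2 ayu).
    unfold z0, ax, ayu. rewrite affC_real, CPSeries_RtoC. simpl. ring.
  - intros x Hx. unfold sub2, re_comp. rewrite (affC_axis z0 ax ay1 ayu), (affC_axis z0 ax ay2 ayu).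
    unfold S', z0, ax, ayu, ay1, ay2, mu. rewrite affC_real, CPSeries_RtoC. simpl. field.
  - unfold sub2, re_comp. rewrite (affC_axis z0 ax ay1 ayu), (affC_axis z0 ax ay2 ayu).
    unfold S', z0, ax, ayu, mu. rewrite affC_real, CPSeries_RtoC. simpl. field.
Qed.

Lemma Rabs_Re_Im_le_2Cmod (v : C) : Rabs (Re v) + Rabs (Im v) <= 2 * Cmod v.
Proof. pose proof (re_le_Cmod v). pose proof (Rabs_Im_le_Cmod v). lra. Qed.

Lemma holo_at_taylor_ext f c a r t delta w : local_pseries f c a r -> Rabs (t - c) < r / 4 ->
  8 * delta <= r -> 0 < delta ->
  Cmod (w - RtoC t)%C < delta -> holo_at (taylor_ext f) w.
Proof.
  intros Hps Htc Hd Hdp Hw. pose proof Hps as [Hr [Hrad _]].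
  destruct (CPSeries_bounds a r ltac:(lra) Hrad) as [K [HK [Q _]]].
  exists (CPSeries (PS_derive a) (w - RtoC c))%C.
  assert (Hloc : forall w', Cmod (w' - RtoC t)%C < 2 * delta ->
    taylor_ext f w' = CPSeries a (w' - RtoC c)%C).
  { intros w' Hw'. apply (taylor_ext_local_pseries f c a r Hps).
    pose proof (Rabs_Re_Im_le_2Cmod (w' - RtoC t)%C).
      rewrite Re_minus, Im_minus, re_RtoC, im_RtoC, Rminus_0_r in H.
    replace (Re w' - c) with ((Re w' - t) + (t - c)) by ring.
    pose proof (Rabs_triang (Re w' - t) (t - c)). lra. }
  apply (is_derive_C_of_quad_rem _ _ _ delta K); auto.
  intros w' Hw'.
  assert (Hw't : Cmod (w' - RtoC t)%C < 2 * delta).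
  { replace (w' - RtoC t)%C with ((w' - w) + (w - RtoC t))%C by ring.
    eapply Rle_lt_trans. apply Cmod_triangle. lra. }
  rewrite (Hloc w' Hw't), (Hloc w) by lra.
  replace (w' - RtoC c)%C with ((w - RtoC c) + (w' - w))%C by ring.
  apply Q.
  replace (w - RtoC c)%C with ((w - RtoC t) + RtoC (t - c))%C by (rewrite RtoC_minus; ring).
  pose proof (Cmod_triangle (w - RtoC t)%C (RtoC (t - c))). rewrite Cmod_R in H. lra.
Qed.

Lemma is_derive_on_m10 f delta : uniform_pseries_radius f delta ->
  forall t, -1 <= t <= 0 -> is_derive f t (Derive f t).
Proof.
  intros [Hd H] t Ht.
  destruct (H t Ht) as [c [a [r [Hps [Htc _]]]]].
  pose proof (is_derive_local_pseries f c a r Hps t ltac:(pose proof Hps as [Hr _]; lra)).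
  rewrite (is_derive_unique _ _ _ H0). auto.
Qed.

Lemma Usol_neg_D2 f delta : uniform_pseries_radius f delta ->
  (forall x, -1 <= x <= 0 -> Derive f x < 0) ->
  forall x y, D2 x y -> Usol f x y < 0.
Proof.
  intros Hrad Hfd x y [Hy [H1 H2]]. rewrite Usol_lower by lra.
  set (al := (x - y - 1) / 2). set (be := (x + y - 1) / 2).
  assert (Hab : be < al) by (unfold al, be; lra).
  destruct (MVT_cor2 f (Derive f) be al Hab) as [xi [Hxi Hxi2]].
  { intros t Ht. apply is_derive_Reals. apply (is_derive_on_m10 f delta Hrad).
    unfold al, be in *; lra. }
  assert (Derive f xi < 0) by (apply Hfd; unfold al, be in *; lra).
  assert (f al - f be < 0) by (rewrite Hxi; nra). lra.
Qed.

Lemma Re_2i_CPSeries_above_ge a A y R0 K :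
  quad_rem_bound (CPSeries a) (CPSeries (PS_derive a)) R0 K -> 0 <= y -> Rabs A + y / 2 <= R0 ->
  - y * Re (CPSeries (PS_derive a) (RtoC A)) - K * y ^ 2 / 2
  <= Re ((2 * Ci) * CPSeries a (RtoC A + (0, (y / 2)%R)))%C.
Proof.
  intros Q Hy HA. set (h := (0, (y / 2)%R) : C).
  assert (Hch : Cmod h = y / 2) by (unfold h; rewrite Cmod_pure_im, Rabs_pos_eq; lra).
  pose proof (Q (RtoC A) h ltac:(rewrite Cmod_R; lra)) as E.
  set (S0 := CPSeries a (RtoC A)). set (S1 := CPSeries (PS_derive a) (RtoC A)).
  set (Er := (CPSeries a (RtoC A + h) - S0 - h * S1)%C) in E.
  replace (CPSeries a (RtoC A + h))%C with (S0 + h * S1 + Er)%C by (unfold Er; ring).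
  assert (HS0 : Im S0 = 0) by apply Im_CPSeries_RtoC.
  assert (HS1 : Im S1 = 0) by apply Im_CPSeries_RtoC.
  replace (Re (2 * Ci * (S0 + h * S1 + Er))%C) with (- y * Re S1 - 2 * Im Er).
  2: { unfold h. clearbody S0 S1 Er. destruct S0 as [p q], S1 as [p1 q1], Er as [p2 q2].
       simpl in HS0, HS1 |- *. subst. field. }
  assert (HEr : Rabs (Im Er) <= K * (y / 2) ^ 2)
    by (eapply Rle_trans; [apply Rabs_Im_le_Cmod| rewrite <- Hch; exact E]).
  replace (K * (y / 2) ^ 2) with (K * y ^ 2 / 4) in HEr by field.
  pose proof (Rle_abs (Im Er)). lra.
Qed.

(* Above the axis U is, to first order in y, [- y f'((x-1)/2)] with a remainder O(y^2), so it
   is positive for small y > 0 wherever f' < 0. *)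
Lemma Usol_pos_near_axis f c a r delta x0 : local_pseries f c a r -> Rabs ((x0 - 1) / 2 - c) < r / 4 ->
  8 * delta <= r -> 0 < delta -> Derive f ((x0 - 1) / 2) < 0 ->
  exists rho, 0 < rho /\ rho <= delta /\
    forall x y, Rabs (x - x0) < rho -> 0 < y < rho -> 0 < Usol f x y.
Proof.
  intros Hps Hc Hd Hdp Hneg. pose proof Hps as [Hr [Hrad _]].
  destruct (CPSeries_bounds_upto2 a r ltac:(lra) Hrad) as [K [HK [Q0 [Q1 [L0 [L1 L2]]]]]].
  set (m0 := - Derive f ((x0 - 1) / 2)).
  assert (Hm0 : 0 < m0) by (unfold m0; lra).
  set (A0 := RtoC ((x0 - 1) / 2 - c)).
  assert (Hm0' : Re (CPSeries (PS_derive a) A0) = - m0).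
  { unfold m0, A0. rewrite (Derive_local_pseries f c a r Hps); [ring | lra]. }
  set (rho := Rmin delta (m0 / (2 * (K + 1)))).
  assert (Hrho : 0 < rho) by (apply Rmin_pos; auto; apply Rdiv_lt_0_compat; lra).
  assert (Hrd : rho <= delta) by apply Rmin_l.
  assert (HrK : rho * (K + 1) <= m0 / 2).
  { apply Rle_trans with (m0 / (2 * (K + 1)) * (K + 1));
    [apply Rmult_le_compat_r; [lra| apply Rmin_r]|].
    right. field. lra. }
  exists rho. split; [auto|split; [auto|]]. intros x y Hx [Hy1 Hy2].
  assert (Hxc : Rabs ((x - 1) / 2 - c) <= Rabs ((x0 - 1) / 2 - c) + rho / 2).
  { replace ((x - 1) / 2 - c) with (((x - 1) / 2 - (x0 - 1) / 2) + ((x0 - 1) / 2 - c)) by ring.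
    pose proof (Rabs_triang ((x - 1) / 2 - (x0 - 1) / 2) ((x0 - 1) / 2 - c)).
    rewrite Rabs_half_sub in H. lra. }
  rewrite Usol_upper by auto.
  rewrite (taylor_ext_local_pseries f c a r Hps).
  2: { rewrite Re_half_pt, Im_half_pt, (Rabs_pos_eq (y / 2)) by lra. lra. }
  replace (half_pt x y - RtoC c)%C with (RtoC ((x - 1) / 2 - c) + (0, (y / 2)%R))%C
    by (apply C_ReIm_eq; rewrite ?Re_minus, ?Im_minus, ?re_plus, ?im_plus, ?Re_half_pt, ?Im_half_pt;
      simpl; ring).
  eapply Rlt_le_trans; [|apply (Re_2i_CPSeries_above_ge a _ y r K Q0); lra].
  set (A1 := RtoC ((x - 1) / 2 - c)).
  assert (HL : Cmod (CPSeries (PS_derive a) A1 - CPSeries (PS_derive a) A0)%C <= K * (rho / 2)).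
  { replace A1 with (A0 + (A1 - A0))%C by ring.
    assert (Cmod (A1 - A0)%C <= rho / 2).
    { unfold A1, A0. rewrite <- RtoC_minus, Cmod_R.
      replace ((x - 1) / 2 - c - ((x0 - 1) / 2 - c)) with ((x - 1) / 2 - (x0 - 1) / 2) by ring.
      rewrite Rabs_half_sub. lra. }
    assert (Cmod A0 = Rabs ((x0 - 1) / 2 - c)) by (unfold A0; apply Cmod_R).
    eapply Rle_trans; [apply L1; lra|].
    replace (A0 + (A1 - A0) - A0)%C with (A1 - A0)%C by ring. apply Rmult_le_compat_l; auto. }
  assert (Hre1 : Re (CPSeries (PS_derive a) A1) <= - m0 + K * (rho / 2)).
  { rewrite <- Hm0'. pose proof (re_le_Cmod (CPSeries (PS_derive a) A1 - CPSeries (PS_derive a) A0)%C).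
    rewrite Re_minus in H.
    pose proof (Rle_abs (Re (CPSeries (PS_derive a) A1) - Re (CPSeries (PS_derive a) A0))). lra. }
  assert (y * Re (CPSeries (PS_derive a) A1) <= y * (- m0 + K * (rho / 2)))
    by (apply Rmult_le_compat_l; lra).
  assert (K * y <= K * rho) by (apply Rmult_le_compat_l; lra).
  assert (K * rho <= m0 / 2) by nra.
  nra.
Qed.

(** * Connectedness *)

Lemma open2_square A x y : open2 A -> A x y -> exists e, 0 < e /\ forall u v, Rabs (u - x) < e ->
  Rabs (v - y) < e -> A u v.
Proof.
  intros HA H. destruct (HA x y H) as [e [He Hb]]. exists (e / 2). split. lra.
  intros u v Hu Hv. apply Hb.
  assert ((u - x) ^ 2 < (e/2) ^ 2).
    { rewrite <- (pow2_abs (u - x)). pose proof (Rabs_pos (u - x)). nra. }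
  assert ((v - y) ^ 2 < (e/2) ^ 2).
    { rewrite <- (pow2_abs (v - y)). pose proof (Rabs_pos (v - y)). nra. }
  nra.
Qed.

Lemma unit_interval_connected (P : R -> Prop) : P 0 ->
  (forall t, 0 <= t <= 1 -> P t ->
     exists e, 0 < e /\ forall s, 0 <= s <= 1 -> Rabs (s - t) < e -> P s) ->
  (forall t, 0 <= t <= 1 -> ~ P t ->
     exists e, 0 < e /\ forall s, 0 <= s <= 1 -> Rabs (s - t) < e -> ~ P s) ->
  P 1.
Proof.
  intros H0 Hopen Hclosed.
  set (Q := fun t => 0 <= t <= 1 /\ forall s, 0 <= s <= t -> P s).
  assert (HQ0 : Q 0) by (split; [lra| intros s Hs; replace s with 0 by lra; exact H0]).
  destruct (completeness Q) as [tau [Hub Hlub]].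
  { exists 1. intros t [Ht _]. lra. }
  { exists 0. exact HQ0. }
  assert (Htau0 : 0 <= tau) by (apply Hub, HQ0).
  assert (Htau1 : tau <= 1) by (apply Hlub; intros t [Ht _]; lra).
  assert (Hbelow : forall s, 0 <= s < tau -> P s).
  { intros s Hs. destruct (classic (exists t, Q t /\ s <= t)) as [[t [[_ Ht] Hst]]|Hn].
    - apply Ht. lra.
    - exfalso. assert (is_upper_bound Q s).
      { intros t Ht. destruct (Rle_lt_dec t s); auto. exfalso. apply Hn. exists t. split; auto; lra. }
      specialize (Hlub s H). lra. }
  destruct (classic (P tau)) as [Ptau|nPtau].
  - destruct (Rle_lt_dec 1 tau) as [Ht1|Ht1]; [replace 1 with tau by lra; exact Ptau|].
    exfalso. destruct (Hopen tau ltac:(lra) Ptau) as [e [He HeP]].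
    set (t' := Rmin (tau + e / 2) 1).
    assert (Ht' : tau < t') by (apply Rmin_glb_lt; lra).
    assert (t' <= tau + e / 2) by apply Rmin_l. assert (t' <= 1) by apply Rmin_r.
    assert (HQt' : Q t').
    { split; [lra|]. intros s Hs. destruct (Rlt_le_dec s tau); [apply Hbelow; lra|].
      apply HeP; [lra|]. rewrite Rabs_pos_eq; lra. }
    specialize (Hub t' HQt'). lra.
  - exfalso. assert (0 < tau) by (destruct (Req_dec tau 0) as [->|]; [contradiction| lra]).
    destruct (Hclosed tau ltac:(lra) nPtau) as [e [He HeP]].
    set (s := Rmax 0 (tau - e / 2)).
    assert (0 <= s) by apply Rmax_l. assert (tau - e / 2 <= s) by apply Rmax_r.
    assert (s < tau) by (apply Rmax_lub_lt; lra).
    apply (HeP s); [lra| rewrite Rabs_left; lra| apply Hbelow; lra].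
Qed.

Lemma segment_near px py qx qy t e : 0 < e -> exists d, 0 < d /\ forall s, Rabs (s - t) < d ->
  Rabs ((px + s * (qx - px)) - (px + t * (qx - px))) < e /\
  Rabs ((py + s * (qy - py)) - (py + t * (qy - py))) < e.
Proof.
  intros He. set (L := Rabs (qx - px) + Rabs (qy - py) + 1).
  assert (HL : 0 < L) by (unfold L; pose proof (Rabs_pos (qx - px));
    pose proof (Rabs_pos (qy - py)); lra).
  exists (e / L). split; [apply Rdiv_lt_0_compat; lra|]. intros s Hs.
  replace (px + s * (qx - px) - (px + t * (qx - px))) with ((s - t) * (qx - px)) by ring.
  replace (py + s * (qy - py) - (py + t * (qy - py))) with ((s - t) * (qy - py)) by ring.
  rewrite !Rabs_mult.
  assert (Rabs (s - t) * L < e).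
  { apply Rlt_le_trans with (e / L * L); [apply Rmult_lt_compat_r; auto| right; field; lra]. }
  unfold L in H. pose proof (Rabs_pos (s - t)). pose proof (Rabs_pos (qx - px)).
  pose proof (Rabs_pos (qy - py)). split; nra.
Qed.

Lemma segment_in_clopen (S A B : R -> R -> Prop) px py qx qy :
  open2 A -> open2 B ->
  (forall x y, S x y -> A x y \/ B x y) -> (forall x y, S x y -> A x y -> B x y -> False) ->
  (forall t, 0 <= t <= 1 -> S (px + t * (qx - px)) (py + t * (qy - py))) ->
  A px py -> A qx qy.
Proof.
  intros HA HB Hcov Hdis Hpath Hp.
  set (P := fun t => A (px + t * (qx - px)) (py + t * (qy - py))).
  assert (HP1 : P 1).
  { apply unit_interval_connected; unfold P.
    - rewrite !Rmult_0_l, !Rplus_0_r. exact Hp.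
    - intros t Ht HAt. destruct (open2_square A _ _ HA HAt) as [e [He HeA]].
      destruct (segment_near px py qx qy t e He) as [d [Hd Hnear]].
      exists d. split; [exact Hd|]. intros s Hs Hst. apply HeA; apply Hnear; exact Hst.
    - intros t Ht HnA. destruct (Hcov _ _ (Hpath t Ht)) as [HAt|HBt]; [contradiction|].
      destruct (open2_square B _ _ HB HBt) as [e [He HeB]].
      destruct (segment_near px py qx qy t e He) as [d [Hd Hnear]].
      exists d. split; [exact Hd|]. intros s Hs Hst HAs.
      apply (Hdis _ _ (Hpath s Hs) HAs). apply HeB; apply Hnear; exact Hst. }
  unfold P in HP1. rewrite !Rmult_1_l in HP1.
  replace qx with (px + (qx - px)) by ring. replace qy with (py + (qy - py)) by ring. exact HP1.
Qed.

Lemma connected2_of_broken_paths (S : R -> R -> Prop) ox oy :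
  S ox oy ->
  (forall qx qy, S qx qy -> exists mx my,
      (forall t, 0 <= t <= 1 -> S (ox + t * (mx - ox)) (oy + t * (my - oy))) /\
      (forall t, 0 <= t <= 1 -> S (mx + t * (qx - mx)) (my + t * (qy - my)))) ->
  connected2 S.
Proof.
  intros Ho Hp [A [B [HA [HB [Hcov [Hdis [[ax [ay [Sa Aa]]] [bx [by_ [Sb Bb]]]]]]]]]].
  assert (Hreach : forall (A' B' : R -> R -> Prop), open2 A' -> open2 B' ->
     (forall x y, S x y -> A' x y \/ B' x y) -> (forall x y, S x y -> A' x y -> B' x y -> False) ->
     A' ox oy -> forall qx qy, S qx qy -> A' qx qy).
  { intros A' B' HA' HB' Hc Hd Ho' qx qy Hq. destruct (Hp qx qy Hq) as [mx [my [P1 P2]]].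
    assert (A' mx my) by (apply (segment_in_clopen S A' B' ox oy mx my); auto).
    apply (segment_in_clopen S A' B' mx my qx qy); auto. }
  destruct (Hcov ox oy Ho) as [Ao|Bo].
  - apply (Hdis bx by_); auto. apply (Hreach A B); auto.
  - apply (Hdis ax ay); auto. apply (Hreach B A); auto.
    intros x y Hs; destruct (Hcov x y Hs); auto.
    intros x y Hs H1 H2; apply (Hdis x y); auto.
Qed.

Lemma sgn_pos u : 0 < u -> sgn u = 1.
Proof. intros H. unfold sgn. destruct (Rlt_dec 0 u); [auto| lra]. Qed.

Lemma sgn_neg u : u < 0 -> sgn u = -1.
Proof. intros H. unfold sgn. destruct (Rlt_dec 0 u); [lra|]. destruct (Rlt_dec u 0); [auto|lra]. Qed.

Lemma Rabs_lt_of_dist2_lt u v x y e : 0 < e -> (u - x) ^ 2 + (v - y) ^ 2 < e ^ 2 ->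
  Rabs (u - x) < e /\ Rabs (v - y) < e.
Proof.
  intros He H. split; rewrite <- (Rabs_pos_eq e) by lra; apply Rsqr_lt_abs_0; unfold Rsqr.
  - pose proof (pow2_ge_0 (v - y)). nra.
  - pose proof (pow2_ge_0 (u - x)). nra.
Qed.

Section Solution.

Variables (f : R -> R) (delta : R).
Hypothesis Hrad : uniform_pseries_radius f delta.
Hypothesis Hfd : forall x, -1 <= x <= 0 -> Derive f x < 0.

(* D1 is the union of the squares above the open segment on which [Usol f] is positive. *)
Definition upper_domain (x y : R) : Prop :=
  0 < y /\ exists x0 rho, -1 < x0 < 1 /\ 0 < rho /\ rho <= delta /\
    -1 <= x0 - rho /\ x0 + rho <= 1 /\ Rabs (x - x0) < rho /\ y < rho /\
    (forall x' y', Rabs (x' - x0) < rho -> 0 < y' < rho -> 0 < Usol f x' y').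

Definition full_domain (x y : R) : Prop := upper_domain x y \/ Seg x y \/ D2 x y.

Lemma upper_domain_inv x y : upper_domain x y -> 0 < y < delta /\ -1 < x < 1 /\ 0 < Usol f x y.
Proof.
  intros [Hy [x0 [rho [H1 [H2 [H3 [H4 [H5 [H6 [H7 H8]]]]]]]]]].
  apply Rabs_def2 in H6. repeat split; try lra. apply H8; [apply Rabs_def1|]; lra.
Qed.

Lemma Usol_pos_above_axis x0 : -1 < x0 < 1 -> exists rho, 0 < rho /\ rho <= delta /\
  -1 <= x0 - 2 * rho /\ x0 + 2 * rho <= 1 /\
  forall x y, Rabs (x - x0) < rho -> 0 < y < rho -> 0 < Usol f x y.
Proof.
  intros Hx0. destruct Hrad as [Hdel Hunif].
  destruct (Hunif ((x0 - 1) / 2) ltac:(lra)) as [c [a [r [Hps [Hc Hr]]]]].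
  destruct (Usol_pos_near_axis f c a r delta x0 Hps Hc Hr Hdel (Hfd ((x0 - 1) / 2) ltac:(lra)))
    as [rho0 [Hr0 [Hr0d Hpos]]].
  set (rho := Rmin rho0 (Rmin ((1 - x0) / 2) ((1 + x0) / 2))).
  assert (rho <= rho0) by apply Rmin_l.
  assert (rho <= (1 - x0) / 2) by (eapply Rle_trans; [apply Rmin_r| apply Rmin_l]).
  assert (rho <= (1 + x0) / 2) by (eapply Rle_trans; [apply Rmin_r| apply Rmin_r]).
  assert (0 < rho) by (apply Rmin_pos; [|apply Rmin_pos]; lra).
  exists rho. repeat split; try lra. intros x y Hx Hy. apply Hpos; lra.
Qed.

Lemma open2_upper_domain : open2 upper_domain.
Proof.
  intros x y [Hy [x0 [rho [H1 [H2 [H3 [H4 [H5 [H6 [H7 H8]]]]]]]]]].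
  set (e := Rmin (rho - Rabs (x - x0)) (Rmin y (rho - y))).
  assert (e <= rho - Rabs (x - x0)) by apply Rmin_l.
  assert (e <= y) by (eapply Rle_trans; [apply Rmin_r| apply Rmin_l]).
  assert (e <= rho - y) by (eapply Rle_trans; [apply Rmin_r| apply Rmin_r]).
  assert (He : 0 < e) by (apply Rmin_pos; [| apply Rmin_pos]; lra).
  exists e. split; [exact He|]. intros u v Huv.
  destruct (Rabs_lt_of_dist2_lt u v x y e He Huv) as [Hu Hv]. apply Rabs_def2 in Hv.
  split; [lra|]. exists x0, rho. repeat split; auto; try lra.
  replace (u - x0) with ((u - x) + (x - x0)) by ring.
  eapply Rle_lt_trans; [apply Rabs_triang| lra].
Qed.

Lemma open2_full_domain : open2 full_domain.
Proof.
  intros x y [HD|[[Hy Hx]|[Hy [H1 H2]]]].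
  - destruct (open2_upper_domain x y HD) as [e [He Hb]].
    exists e. split; [auto|]. intros u v Huv. left. auto.
  - subst y. destruct (Usol_pos_above_axis x Hx) as [rho [Hr [Hrd [Hl1 [Hl2 Hpos]]]]].
    exists rho. split; [auto|]. intros u v Huv.
    destruct (Rabs_lt_of_dist2_lt u v x 0 rho Hr Huv) as [Hu Hv].
    rewrite Rminus_0_r in Hv. pose proof Hu as Hu'. apply Rabs_def2 in Hu'. apply Rabs_def2 in Hv.
    destruct (Rlt_le_dec 0 v) as [hv|hv]; [|destruct (Req_dec v 0) as [hv0|hv0]].
    + left. split; auto. exists x, rho. repeat split; auto; lra.
    + right; left. split; auto; lra.
    + right; right. split; [lra|split; lra].
  - set (e := Rmin (- y) (Rmin (y - (x - 1)) (y + x + 1)) / 2).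
    assert (e <= - y / 2) by (apply Rmult_le_compat_r; [lra| apply Rmin_l]).
    assert (e <= (y - (x - 1)) / 2)
      by (apply Rmult_le_compat_r; [lra| eapply Rle_trans; [apply Rmin_r| apply Rmin_l]]).
    assert (e <= (y + x + 1) / 2)
      by (apply Rmult_le_compat_r; [lra| eapply Rle_trans; [apply Rmin_r| apply Rmin_r]]).
    assert (He : 0 < e) by (apply Rdiv_lt_0_compat; [apply Rmin_pos; [|apply Rmin_pos]|]; lra).
    exists e. split; [auto|]. intros u v Huv.
    destruct (Rabs_lt_of_dist2_lt u v x y e He Huv) as [Hu Hv].
    apply Rabs_def2 in Hu. apply Rabs_def2 in Hv.
    right; right. split; [lra| split; lra].
Qed.

(* Every point is joined to the origin by a vertical segment to the axis followed by a
   horizontal one (for D2, by the radius through the origin, D2 being star-shaped). *)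
Lemma connected2_full_domain : connected2 full_domain.
Proof.
  apply (connected2_of_broken_paths _ 0 0). { right; left; split; auto; lra. }
  intros qx qy [HD|[[Hy Hx]|HD]].
  - pose proof (upper_domain_inv qx qy HD) as [[Hqy _] [Hqx _]].
    destruct HD as [_ [x0 [rho [H1 [H2 [H3 [H4 [H5 [H6 [H7 H8]]]]]]]]]].
    exists qx, 0. split.
    + intros t Ht. right; left. split; [ring|]. nra.
    + intros t Ht. destruct (Req_dec t 0) as [->|h].
      * right; left. split; [ring|]. replace (qx + 0 * (qx - qx)) with qx by ring. auto.
      * left. replace (qx + t * (qx - qx)) with qx by ring.
        replace (0 + t * (qy - 0)) with (t * qy) by ring.
        split; [nra|]. exists x0, rho. repeat split; auto; nra.
  - subst qy. exists qx, 0. split.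
    + intros t Ht. right; left. split; [ring|]. nra.
    + intros t Ht. right; left. split; [ring|]. replace (qx + t * (qx - qx)) with qx by ring. auto.
  - destruct HD as [Hy [H1 H2]]. exists qx, qy. split.
    + intros t Ht. destruct (Req_dec t 0) as [->|h].
      * right; left. split; [ring|]. lra.
      * right; right. replace (0 + t * (qx - 0)) with (t * qx) by ring.
        replace (0 + t * (qy - 0)) with (t * qy) by ring. split; [nra|split; nra].
    + intros t Ht. right; right. replace (qx + t * (qx - qx)) with qx by ring.
      replace (qy + t * (qy - qy)) with qy by ring. split; auto.
Qed.

Lemma domain2_full_domain : domain2 full_domain.
Proof.
  split; [|split; [apply open2_full_domain | apply connected2_full_domain]].
  exists 0, 0. right; left. split; auto; lra.
Qed.

Lemma Usol_harmonic x y : upper_domain x y ->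
  C1at (Usol f) x y /\ C1at (dx (Usol f)) x y /\ C1at (dy (Usol f)) x y /\
  dx (dx (Usol f)) x y + dy (dy (Usol f)) x y = 0.
Proof.
  intros HD. destruct (upper_domain_inv x y HD) as [[Hy Hyd] [Hx _]]. destruct Hrad as [Hdel Hunif].
  destruct (Hunif ((x - 1) / 2) ltac:(lra)) as [c [a [r [Hps [Hc Hr]]]]].
  assert (Rmin (y / 8) (delta / 16) <= y / 8) by apply Rmin_l.
  assert (Rmin (y / 8) (delta / 16) <= delta / 16) by apply Rmin_r.
  apply (Usol_harmonic_at f c a r x y (Rmin (y / 8) (delta / 16)) Hps); [apply Rmin_pos| |]; lra.
Qed.

Lemma Usol_wave x y : D2 x y ->
  C1at (Usol f) x y /\ C1at (dx (Usol f)) x y /\ C1at (dy (Usol f)) x y /\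
  dx (dx (Usol f)) x y - dy (dy (Usol f)) x y = 0.
Proof.
  intros [Hy [H1 H2]]. destruct Hrad as [Hdel Hunif].
  destruct (Hunif ((x - y - 1) / 2) ltac:(lra)) as [c1 [a1 [r1 [HL1 [Hc1 Hr1]]]]].
  destruct (Hunif ((x + y - 1) / 2) ltac:(lra)) as [c2 [a2 [r2 [HL2 [Hc2 Hr2]]]]].
  set (rb := Rmin (- y / 8) (delta / 16)).
  assert (rb <= - y / 8) by apply Rmin_l. assert (rb <= delta / 16) by apply Rmin_r.
  assert (0 < rb) by (apply Rmin_pos; lra).
  apply (Usol_wave_at f c1 a1 r1 c2 a2 r2 x y rb HL1 HL2); lra.
Qed.

Lemma Usol_C1on_full_domain : C1on full_domain (Usol f).
Proof.
  intros x y [HD|[[-> Hx]|HD]].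
  - apply (Usol_harmonic x y HD).
  - destruct Hrad as [Hdel Hunif].
    destruct (Hunif ((x - 1) / 2) ltac:(lra)) as [c [a [r [Hps [Hc Hr]]]]].
    apply (Usol_C1at_axis f c a r x (delta / 16) Hps); lra.
  - apply (Usol_wave x y HD).
Qed.

Lemma Usol_equation x y : upper_domain x y \/ D2 x y ->
  dx (dx (Usol f)) x y + sgn (Usol f x y) * dy (dy (Usol f)) x y = 0.
Proof.
  intros [HD|HD].
  - destruct (upper_domain_inv x y HD) as [_ [_ Hp]].
    rewrite sgn_pos, Rmult_1_l by exact Hp. apply (Usol_harmonic x y HD).
  - rewrite sgn_neg by exact (Usol_neg_D2 f delta Hrad Hfd x y HD). pose proof (Usol_wave x y HD). lra.
Qed.

Lemma holo_at_taylor_ext_near_m10 w :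
  (exists t, -1 <= t <= 0 /\ Cmod (w - RtoC t)%C < delta) -> holo_at (taylor_ext f) w.
Proof.
  intros [t [Ht Hw]]. destruct Hrad as [Hdel Hunif].
  destruct (Hunif t Ht) as [c [a [r [Hps [Hc Hr]]]]].
  apply (holo_at_taylor_ext f c a r t delta w); auto.
Qed.

Lemma Usol_upper_domain_formula x y : upper_domain x y ->
  let w := Cmult (Cminus (x, y) (RtoC 1)) (RtoC (/ 2)) in
  let w' := Cmult (Cminus (x, - y) (RtoC 1)) (RtoC (/ 2)) in
  (exists t, -1 <= t <= 0 /\ Cmod (Cminus w (RtoC t)) < delta) /\
  (exists t, -1 <= t <= 0 /\ Cmod (Cminus w' (RtoC t)) < delta) /\
  Usol f x y = Re (Cmult Ci (Cminus (taylor_ext f w) (taylor_ext f w'))).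
Proof.
  intros HD. destruct (upper_domain_inv x y HD) as [[Hy Hyd] [Hx _]]. cbv zeta.
  assert (Hm : forall s,
    Cmod (Cminus (Cmult (Cminus (x, s) (RtoC 1)) (RtoC (/ 2))) (RtoC ((x - 1) / 2)))
                         = Rabs s / 2).
  { intros s. replace (Cminus _ (RtoC ((x - 1) / 2))) with ((0, (s / 2)%R) : C)
      by (apply C_ReIm_eq; simpl; field).
    rewrite Cmod_pure_im, Rabs_div, (Rabs_pos_eq 2) by lra. reflexivity. }
  split; [|split].
  - exists ((x - 1) / 2). split; [lra|]. rewrite Hm, Rabs_pos_eq; lra.
  - exists ((x - 1) / 2). split; [lra|]. rewrite Hm, Rabs_Ropp, Rabs_pos_eq; lra.
  - unfold Usol. destruct (Rle_dec y 0); [lra|reflexivity].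
Qed.

End Solution.

Lemma Usol_on_AC f : f (-1) = 0 -> forall x, -1 <= x <= 0 -> Usol f x (- x - 1) = f x.
Proof.
  intros Hf0 x Hx. rewrite Usol_lower by lra.
  replace ((x - (- x - 1) - 1) / 2) with x by field.
  replace ((x + (- x - 1) - 1) / 2) with (-1) by field. rewrite Hf0. ring.
Qed.

Theorem mainTheorem2 (f : R -> R)
  (Hf_an : analytic_near_m10 f)
  (Hf0 : f (-1) = 0)
  (Hfd : forall x, -1 <= x <= 0 -> Derive f x < 0) :
  exists (D1 : R -> R -> Prop) (U : R -> R -> R),
    open2 D1 /\
    (forall x y, D1 x y -> 0 < y) /\
    domain2 (fun x y => D1 x y \/ Seg x y \/ D2 x y) /\
    C1on (fun x y => D1 x y \/ Seg x y \/ D2 x y) U /\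
    C2on D1 U /\ C2on D2 U /\
    (forall x y, D1 x y \/ D2 x y ->
       dx (dx U) x y + sgn (U x y) * dy (dy U) x y = 0) /\
    (forall x y, D1 x y -> 0 < U x y) /\
    (forall x y, D2 x y -> U x y < 0) /\
    (forall x, -1 <= x <= 0 -> U x (- x - 1) = f x) /\
    (* explicit form in D2 *)
    (forall x y, D2 x y ->
       U x y = f ((x - y - 1) / 2) - f ((x + y - 1) / 2)) /\
    (* explicit form in D1 via the holomorphic extension g of f *)
    (exists (g : C -> C) (delta : R), 0 < delta /\
       (forall w : C, (exists t, -1 <= t <= 0 /\ Cmod (Cminus w (RtoC t)) < delta) ->
          holo_at g w) /\
       (forall t, -1 - delta < t < delta -> g (RtoC t) = RtoC (f t)) /\
       (forall x y, D1 x y ->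
          let w := Cmult (Cminus (x, y) (RtoC 1)) (RtoC (/ 2)) in
          let w' := Cmult (Cminus (x, - y) (RtoC 1)) (RtoC (/ 2)) in
          (exists t, -1 <= t <= 0 /\ Cmod (Cminus w (RtoC t)) < delta) /\
          (exists t, -1 <= t <= 0 /\ Cmod (Cminus w' (RtoC t)) < delta) /\
          U x y = Re (Cmult Ci (Cminus (g w) (g w'))))).
Proof.
  destruct (uniform_local_pseries f Hf_an) as [delta Hrad].
  exists (upper_domain f delta), (Usol f).
  split; [apply open2_upper_domain|].
  split; [intros x y HD; apply (upper_domain_inv f delta x y HD)|].
  split; [apply domain2_full_domain; auto|].
  split; [apply Usol_C1on_full_domain; auto|].
  split; [split; [|split]; intros x y HD; apply (Usol_harmonic f delta Hrad x y HD)|].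
  split; [split; [|split]; intros x y HD; apply (Usol_wave f delta Hrad x y HD)|].
  split; [apply Usol_equation; auto|].
  split; [intros x y HD; apply (upper_domain_inv f delta x y HD)|].
  split; [apply (Usol_neg_D2 f delta Hrad Hfd)|].
  split; [apply Usol_on_AC, Hf0|].
  split; [intros x y [Hy _]; apply Usol_lower; lra|].
  exists (taylor_ext f), delta. split; [exact (proj1 Hrad)|].
  split; [exact (holo_at_taylor_ext_near_m10 f delta Hrad)|].
  split; [intros t _; apply taylor_ext_RtoC|].
  exact (Usol_upper_domain_formula f delta).
Qed.
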